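(* Let $D$ be a countable solid digraph. Then the following are equivalent: (i) $D$ is strongly connected; (ii) there is a closed directed topological path in $|D|$ whose image contains all the vertices of $D$.
   Context: Digraphs have no loops and no parallel edges. $\mathcal{X}(D)$: finite subsets of $V(D)$. $D$ is solid if $D-X$ has only finitely many strong components for every $X\in\mathcal{X}(D)$. Ends and limit edges: rays are one-way infinite directed paths, tails are subrays; a ray is solid if for each $X\in\mathcal{X}(D)$ it has a tail in a strong component of $D-X$; solid rays are equivalent if for each $X$ they have tails in the same strong component; classes are ends, $\Omega(D)$. $C(X,\omega)$: strong component of $D-X$ containing tails of rays of $\omega$ ($\omega$ lives in it); $X$ separates ends $\omega,\eta$ if $C(X,\omega)\ne C(X,\eta)$. For distinct ends, $(\omega,\eta)$ is a limit edge (tail $\omega$, head $\eta$) if for each $X$ separating them $D$ has an edge from $C(X,\omega)$ to $C(X,\eta)$; for a vertex $v$, $(v,\omega)$ (resp. $(\omega,v)$) is a limit edge if $D$ has an edge from $v$ to $C(X,\omega)$ (resp. from $C(X,\omega)$ to $v$) for all $X$ with $v\notin C(X,\omega)$. $\Lambda(D)$: limit edges. $|D|$: from $V(D)\cup\Omega(D)$ and copies $[0,1]_e$, $e\in E(D)\cup\Lambda(D)$, identify the tail of $e$ with $0$ and head with $1$ (the edges of $|D|$); points on different edges correspond if they come from the same real. A limit edge lives in a strong component $C$ of $D-X$ if each endpoint is a vertex of or an end living in $C$. Topology generated by: (1) open $\varepsilon$-stars around vertices; (2) open subintervals of interiors of edges of $D$; (3) for an end $\omega$ and $X\in\mathcal{X}(D)$,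 $\hat C_\varepsilon(X,\omega)$: vertices and inner points of edges of $C(X,\omega)$, ends living in $C(X,\omega)$, points of limit edges living in $C(X,\omega)$, and for each edge of $E(D)\cup\Lambda(D)$ with exactly one endpoint $y$ a vertex of/end living in $C(X,\omega)$, the half-open segment of length $\varepsilon$ at $y$; (4) for an inner point $z$ of a limit edge $(\omega,\eta)$ and $X$ separating $\omega,\eta$: union of open $\varepsilon$-intervals around points corresponding to $z$ on all edges of $D$ from $C(X,\omega)$ to $C(X,\eta)$ and on limit edges with tail a vertex of/end living in $C(X,\omega)$ and head a vertex of/end living in $C(X,\eta)$; for $(v,\omega)$ with $v\in X$ analogously over edges of $D$ from $v$ to $C(X,\omega)$ and limit edges $(v,\omega')$, $\omega'$ living in $C(X,\omega)$; symmetrically for $(\omega,v)$. A directed topological path is a continuous $\alpha\colon[0,1]\to|D|$ such that for every $x\in(0,1)$ mapped to an inner point of an edge $e$ of $|D|$ there is a neighbourhood $(a,b)$ of $x$ on which $\alpha$ is a homeomorphism onto the interior of $e$, and on each such $[a,b]$ it is order preserving with respect to $[0,1]_e$. It is closed if $\alpha(0)=\alpha(1)$. *)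

From Stdlib Require Import Reals Lra List.
Open Scope R_scope.

Set Implicit Arguments.

Section Digraph.
(* A digraph: vertex type V, edge relation E (no parallel edges by
   construction; loops excluded by the hypothesis of the theorem). *)
Context {V : Type} (E : V -> V -> Prop).

Definition finite_set (X : V -> Prop) : Prop :=
  exists l : list V, forall v, X v -> In v l.

Inductive reach (X : V -> Prop) : V -> V -> Prop :=
| reach_refl v : ~ X v -> reach X v v
| reach_step u v w : ~ X u -> E u v -> reach X v w -> reach X u w.

Definition sc (X : V -> Prop) (u v : V) : Prop := reach X u v /\ reach X v u.

Definition no_vertices : V -> Prop := fun _ => False.

Definition strongly_connected : Prop :=
  (exists v : V, True) /\ forall u v, reach no_vertices u v.

Definition is_scomp (X : V -> Prop) (C : V -> Prop) : Prop :=
  exists c, ~ X c /\ forall v, C v <-> sc X c v.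

(* D is solid: D - X has finitely many strong components for finite X *)
Definition solid : Prop :=
  forall X, finite_set X ->
    exists l : list V, forall v, ~ X v -> exists c, In c l /\ sc X c v.

Definition countable_vertices : Prop :=
  exists f : V -> nat, forall u v, f u = f v -> u = v.

Definition ray (r : nat -> V) : Prop :=
  (forall m n, r m = r n -> m = n) /\ forall n, E (r n) (r (S n)).

Definition tail_in (r : nat -> V) (C : V -> Prop) : Prop :=
  exists k, forall n, (k <= n)%nat -> C (r n).

Definition solid_ray (r : nat -> V) : Prop :=
  ray r /\ forall X, finite_set X -> exists C, is_scomp X C /\ tail_in r C.

Definition equiv_rays (r r' : nat -> V) : Prop :=
  forall X, finite_set X -> exists C, is_scomp X C /\ tail_in r C /\ tail_in r' C.

Definition is_end (w : (nat -> V) -> Prop) : Prop :=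
  exists r0, solid_ray r0 /\ forall r, w r <-> (solid_ray r /\ equiv_rays r0 r).

Definition lives (X : V -> Prop) (w : (nat -> V) -> Prop) (C : V -> Prop) : Prop :=
  is_scomp X C /\ forall r, w r -> tail_in r C.

Definition same_set (A B : V -> Prop) : Prop := forall v, A v <-> B v.

Definition limit_ee (w w' : (nat -> V) -> Prop) : Prop :=
  forall X, finite_set X -> forall C1 C2, lives X w C1 -> lives X w' C2 ->
    ~ same_set C1 C2 -> exists u v, C1 u /\ C2 v /\ E u v.

Definition limit_ve (v : V) (w : (nat -> V) -> Prop) : Prop :=
  forall X, finite_set X -> forall C, lives X w C -> ~ C v ->
    exists u, C u /\ E v u.

Definition limit_ev (w : (nat -> V) -> Prop) (v : V) : Prop :=
  forall X, finite_set X -> forall C, lives X w C -> ~ C v ->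
    exists u, C u /\ E u v.

Inductive node : Type :=
| NV : V -> node
| NE : ((nat -> V) -> Prop) -> node.

Definition valid_node (n : node) : Prop :=
  match n with NV _ => True | NE w => is_end w end.

Definition dedge (x y : node) : Prop :=
  match x, y with
  | NV u, NV v => E u v
  | NV v, NE w => is_end w /\ limit_ve v w
  | NE w, NV v => is_end w /\ limit_ev w v
  | NE w, NE w' => is_end w /\ is_end w' /\ w <> w' /\ limit_ee w w'
  end.

(* points of |D|: nodes, and inner points PI x y r (0<r<1) of edges (x,y);
   the points 0 and 1 of [0,1]_e are identified with the tail and head *)
Inductive point : Type :=
| PN : node -> point
| PI : node -> node -> R -> point.

Definition valid_point (p : point) : Prop :=
  match p with
  | PN n => valid_node n
  | PI x y r => dedge x y /\ 0 < r < 1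
  end.

Definition node_in (X : V -> Prop) (C : V -> Prop) (n : node) : Prop :=
  match n with
  | NV v => C v
  | NE w => is_end w /\ lives X w C
  end.

Definition star (v : V) (eps : R) : point -> Prop := fun p =>
  p = PN (NV v)
  \/ (exists y r, p = PI (NV v) y r /\ dedge (NV v) y /\ 0 < r < eps)
  \/ (exists x r, p = PI x (NV v) r /\ dedge x (NV v) /\ 1 - eps < r < 1).

Definition edge_interval (u v : V) (a b : R) : point -> Prop := fun p =>
  exists r, p = PI (NV u) (NV v) r /\ a < r < b.

(* (3) \hat C_eps(X, omega), with C = C(X, omega) *)
Definition Chat (X C : V -> Prop) (eps : R) : point -> Prop := fun p =>
  (exists n, p = PN n /\ node_in X C n)
  \/ (exists x y r, p = PI x y r /\ dedge x y /\ 0 < r < 1 /\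
       ((node_in X C x /\ node_in X C y)
        \/ (node_in X C x /\ ~ node_in X C y /\ r < eps)
        \/ (~ node_in X C x /\ node_in X C y /\ 1 - eps < r))).

Definition limit_nbhd (X C1 C2 : V -> Prop) (z eps : R) : point -> Prop := fun p =>
  exists x y r, p = PI x y r /\ dedge x y /\
    node_in X C1 x /\ node_in X C2 y /\ Rabs (r - z) < eps.

Definition limit_nbhd_from (X : V -> Prop) (v : V) (C : V -> Prop) (z eps : R)
  : point -> Prop := fun p =>
  exists y r, p = PI (NV v) y r /\ dedge (NV v) y /\
    node_in X C y /\ Rabs (r - z) < eps.

Definition limit_nbhd_to (X : V -> Prop) (C : V -> Prop) (v : V) (z eps : R)
  : point -> Prop := fun p =>
  exists x r, p = PI x (NV v) r /\ dedge x (NV v) /\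
    node_in X C x /\ Rabs (r - z) < eps.

Definition subbase (U : point -> Prop) : Prop :=
  (exists v eps, 0 < eps /\ U = star v eps)
  \/ (exists u v a b, E u v /\ 0 <= a < b /\ b <= 1 /\ U = edge_interval u v a b)
  \/ (exists X w C eps, finite_set X /\ is_end w /\ lives X w C /\ 0 < eps /\
        U = Chat X C eps)
  \/ (exists X w w' C1 C2 z eps, dedge (NE w) (NE w') /\ 0 < z < 1 /\
        finite_set X /\ lives X w C1 /\ lives X w' C2 /\ ~ same_set C1 C2 /\
        0 < eps /\ U = limit_nbhd X C1 C2 z eps)
  \/ (exists X v w C z eps, dedge (NV v) (NE w) /\ 0 < z < 1 /\
        finite_set X /\ X v /\ lives X w C /\ 0 < eps /\
        U = limit_nbhd_from X v C z eps)
  \/ (exists X w v C z eps, dedge (NE w) (NV v) /\ 0 < z < 1 /\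
        finite_set X /\ X v /\ lives X w C /\ 0 < eps /\
        U = limit_nbhd_to X C v z eps).

Definition openD (U : point -> Prop) : Prop :=
  forall p, valid_point p -> U p ->
    exists l : list (point -> Prop),
      Forall subbase l /\ Forall (fun W => W p) l /\
      forall q, valid_point q -> Forall (fun W => W q) l -> U q.

Definition open_in (A S : R -> Prop) : Prop :=
  forall t, A t -> S t ->
    exists d, 0 < d /\ forall s, A s -> Rabs (s - t) < d -> S s.

Definition unit_interval : R -> Prop := fun t => 0 <= t <= 1.

Definition continuous_path (alpha : R -> point) : Prop :=
  (forall t, unit_interval t -> valid_point (alpha t)) /\
  forall U, openD U ->
    open_in unit_interval (fun t => unit_interval t /\ U (alpha t)).

Definition edge_coord (x y : node) (p : point) (c : R) : Prop :=
  (p = PN x /\ c = 0) \/ (p = PN y /\ c = 1) \/ (p = PI x y c /\ 0 < c < 1).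

Definition homeo_onto_edge (alpha : R -> point) (a b : R) (x y : node) : Prop :=
  (forall t, a < t < b -> exists s, 0 < s < 1 /\ alpha t = PI x y s)
  /\ (forall s, 0 < s < 1 -> exists t, a < t < b /\ alpha t = PI x y s)
  /\ (forall t t', a < t < b -> a < t' < b -> alpha t = alpha t' -> t = t')
  /\ (forall U, openD U ->
        open_in (fun t => a < t < b) (fun t => a < t < b /\ U (alpha t)))
  /\ (forall S, open_in (fun t => a < t < b) S ->
        exists U, openD U /\ forall s, 0 < s < 1 ->
          (U (PI x y s) <-> exists t, a < t < b /\ S t /\ alpha t = PI x y s)).

Definition order_preserving_on (alpha : R -> point) (a b : R) (x y : node) : Prop :=
  forall t t', a <= t -> t <= t' -> t' <= b ->
    exists c c', edge_coord x y (alpha t) c /\ edge_coord x y (alpha t') c' /\ c <= c'.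

Definition directed_top_path (alpha : R -> point) : Prop :=
  continuous_path alpha /\
  forall t x y r, 0 < t < 1 -> alpha t = PI x y r ->
    exists a b, 0 <= a < t /\ t < b <= 1 /\
      homeo_onto_edge alpha a b x y /\ order_preserving_on alpha a b x y.

Definition closed_path (alpha : R -> point) : Prop := alpha 0 = alpha 1.

End Digraph.

(* Enumerate the vertices and let X_n consist of v0 and the first vertices of the
   enumeration. The path is the limit of subdivisions of [0,1] into vertex and edge
   slots: at stage n+1 the slot of a vertex u outside X_n is replaced by a closed walk
   from u in its strong component of D - X_n that passes through every vertex of X_{n+1}
   in that component and meets each of the finitely many (by solidity) strong components
   of D - X_{n+1} inside it. A vertex slot is frozen once its vertex lies in some X_n; a
   time that stays in refined vertex slots forever follows a nested sequence of
   components C(X_n, u_n), i.e. an end, and is mapped to it. Continuity at such a time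
   holds because its slots shrink into C(X_n, u_n) from both sides; directedness and
   closedness are built into the slots.
   Conversely, fix a vertex u. Being reachable from u passes from the tail to the head
   of every edge and limit edge of |D|, so along a directed path the reachable points
   persist to the right and the unreachable ones form an open set; a closed directed
   path through all vertices therefore leaves no vertex unreachable. *)

From Stdlib Require Import Reals Lra Lia List Classical ClassicalEpsilon.
Open Scope R_scope.
Set Implicit Arguments.
Unset Strict Implicit.

Lemma bounded_pred_has_max (P : nat -> Prop) B :
  (forall k, P k -> (k < B)%nat) -> forall i, P i ->
  exists j, P j /\ forall k, P k -> (k <= j)%nat.
Proof.
  revert P; induction B as [|B IH]; intros P HB i Hi.
  - specialize (HB i Hi); lia.
  - destruct (classic (P B)) as [HPB|HPB].
    + exists B; split; auto. intros k Hk; specialize (HB k Hk); lia.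
    + refine (IH P _ i Hi). intros k Hk. specialize (HB k Hk).
      destruct (Nat.eq_dec k B); [subst; contradiction|lia].
Qed.

Lemma last_cons {A : Type} (x a : A) l : last (a :: l) x = last l a.
Proof.
  revert x a; induction l as [|b l IH]; intros x a; auto.
  change (last (b :: l) x = last (b :: l) a). rewrite !IH; auto.
Qed.

Lemma last_app {A : Type} (x : A) l1 l2 : last (l1 ++ l2) x = last l2 (last l1 x).
Proof.
  revert x; induction l1 as [|a l1 IH]; intros x; auto.
  rewrite <- app_comm_cons, (last_cons x a (l1 ++ l2)), IH, last_cons. auto.
Qed.

Lemma last_In {A : Type} (x : A) l : In (last l x) (x :: l).
Proof.
  revert x; induction l; intros x; [simpl; auto|].
  rewrite last_cons. destruct (IHl a); simpl; auto.
Qed.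

Lemma last_nth {A : Type} (x : A) l : last l x = nth (length l) (x :: l) x.
Proof.
  revert x; induction l as [|a l IH]; intros x; auto.
  rewrite last_cons, IH. change (nth (length l) (a :: l) a = nth (length l) (a :: l) x).
  apply nth_indep. simpl; lia.
Qed.

(** * Walks and strong components *)

Section Reachability.
Context {V : Type} (E : V -> V -> Prop).

Lemma reach_avoids_l X u v : reach E X u v -> ~ X u.
Proof. intros H; destruct H; auto. Qed.

Lemma reach_avoids_r X u v : reach E X u v -> ~ X v.
Proof. intros H; induction H; auto. Qed.

Lemma reach_trans X u v w : reach E X u v -> reach E X v w -> reach E X u w.
Proof. intros H; induction H; intros; auto. eapply reach_step; eauto. Qed.

Lemma reach_weaken (X X' : V -> Prop) u v :
  (forall x, X' x -> X x) -> reach E X u v -> reach E X' u v.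
Proof. intros HX H; induction H; [constructor; auto|eapply reach_step; eauto]. Qed.

Lemma reach_edge X u v : ~ X u -> ~ X v -> E u v -> reach E X u v.
Proof. intros; eapply reach_step; eauto. constructor; auto. Qed.

Lemma sc_refl X u : ~ X u -> sc E X u u.
Proof. split; constructor; auto. Qed.

Lemma sc_sym X u v : sc E X u v -> sc E X v u.
Proof. intros [? ?]; split; auto. Qed.

Lemma sc_trans X u v w : sc E X u v -> sc E X v w -> sc E X u w.
Proof. intros [? ?] [? ?]; split; eapply reach_trans; eauto. Qed.

Lemma sc_weaken (X X' : V -> Prop) u v :
  (forall x, X' x -> X x) -> sc E X u v -> sc E X' u v.
Proof. intros HX [? ?]; split; eapply reach_weaken; eauto. Qed.

Lemma sc_avoids_l X u v : sc E X u v -> ~ X u.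
Proof. intros [H _]; eapply reach_avoids_l; eauto. Qed.

Lemma sc_avoids_r X u v : sc E X u v -> ~ X v.
Proof. intros [H _]; eapply reach_avoids_r; eauto. Qed.

Lemma scomp_nonempty X C : is_scomp E X C -> exists c, C c.
Proof. intros [c [Hc HC]]. exists c. apply HC. apply sc_refl; auto. Qed.

Lemma scomp_unique X (C C' : V -> Prop) z : is_scomp E X C -> is_scomp E X C' ->
  C z -> C' z -> forall y, C y -> C' y.
Proof.
  intros [c [Hc HC]] [c' [Hc' HC']] Hz Hz' y Hy.
  apply HC'. apply HC in Hy. apply HC in Hz. apply HC' in Hz'.
  eapply sc_trans; [apply Hz'|]. eapply sc_trans; [apply sc_sym, Hz|]. auto.
Qed.

Fixpoint walk (x : V) (l : list V) : Prop :=
  match l with nil => True | y :: l' => E x y /\ walk y l' end.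

Lemma walk_app x l1 l2 : walk x l1 -> walk (last l1 x) l2 -> walk x (l1 ++ l2).
Proof.
  revert x; induction l1 as [|a l1 IH]; simpl; intros x H1 H2; auto.
  destruct H1 as [Ha H1]; split; auto. apply IH; auto. rewrite <- (last_cons x). auto.
Qed.

Lemma walk_nth x l j d : walk x l -> (j < length l)%nat ->
  E (nth j (x :: l) d) (nth (S j) (x :: l) d).
Proof.
  revert x j; induction l as [|a l IH]; intros x j Hc Hj; simpl in Hj; [lia|].
  destruct Hc as [Hxa Hc]. destruct j as [|j]; [simpl; auto|].
  specialize (IH a j Hc ltac:(lia)). simpl in IH |- *. auto.
Qed.

Lemma reach_walk X u v : reach E X u v ->
  exists l, walk u l /\ last l u = v /\ (forall z, In z (u :: l) -> ~ X z).
Proof.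
  intros H; induction H.
  - exists nil; simpl; repeat split; auto. intros z [<-|[]]; auto.
  - destruct IHreach as [l [Hc [Hl Hn]]]. exists (v :: l).
    split; [split; auto|split]; [rewrite last_cons; auto|]. intros z [<-|Hz]; auto.
Qed.

Lemma walk_reach X u l : walk u l -> (forall z, In z (u :: l) -> ~ X z) ->
  forall z, In z (u :: l) -> reach E X u z /\ reach E X z (last l u).
Proof.
  revert u; induction l as [|a l IH]; intros u Hc Hn z Hz.
  - destruct Hz as [<-|[]]. split; constructor; apply Hn; simpl; auto.
  - simpl in Hc. destruct Hc as [Hua Hc].
    assert (Ha : reach E X u a) by (apply reach_edge; auto; apply Hn; simpl; auto).
    assert (IH' := IH a Hc (fun z Hz => Hn z (or_intror Hz))).
    rewrite last_cons. destruct Hz as [<-|Hz].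
    + split; [constructor; apply Hn; simpl; auto|].
      eapply reach_trans; eauto. apply (IH' a (or_introl eq_refl)).
    + destruct (IH' z Hz); split; auto. eapply reach_trans; eauto.
Qed.

Lemma closed_walk_covering X u (L : list V) : ~ X u ->
  exists l, walk u l /\ last l u = u /\ (forall z, In z (u :: l) -> ~ X z) /\
    (forall y, In y L -> sc E X u y -> In y (u :: l)).
Proof.
  intros Hu. induction L as [|y L IH].
  - exists nil; simpl; repeat split; auto. intros z [<-|[]]; auto.
  - destruct IH as [l [Hc [Hl [Hn Hcov]]]].
    destruct (classic (sc E X u y)) as [[Huy Hyu]|Hy].
    + destruct (reach_walk Huy) as [l1 [Hc1 [Hl1 Hn1]]].
      destruct (reach_walk Hyu) as [l2 [Hc2 [Hl2 Hn2]]].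
      exists (l1 ++ l2 ++ l). repeat split.
      * apply walk_app; auto. rewrite Hl1. apply walk_app; auto. rewrite Hl2; auto.
      * rewrite !last_app, Hl1, Hl2; auto.
      * intros z [<-|Hz]; auto.
        apply in_app_or in Hz; destruct Hz as [Hz|Hz]; [apply Hn1; simpl; auto|].
        apply in_app_or in Hz; destruct Hz as [Hz|Hz]; [apply Hn2|apply Hn]; simpl; auto.
      * intros z [<-|Hz] Hz'.
        { assert (H := last_In u l1). rewrite Hl1 in H. destruct H as [H|H]; [left; auto|].
          right; apply in_or_app; auto. }
        { destruct (Hcov z Hz Hz') as [H|H]; [left; auto|].
          right; apply in_or_app; right; apply in_or_app; auto. }
    + exists l; repeat split; auto. intros z [<-|Hz] Hz'; [contradiction|auto].
Qed.

End Reachability.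

(** * Laying walks out on intervals *)

Inductive piece (V : Type) := OnVertex (u : V) (s e : R) | OnEdge (x y : V) (a b : R).

Section Layout.
Context {V : Type} (E : V -> V -> Prop).

(* [layout w l s L] lays the walk [w :: l] out on [s, s + slots l * L]: slots of
   length [L] alternately carry its vertices (closed slots) and its edges (open
   slots). *)
Fixpoint layout (w : V) (l : list V) (s L t : R) : piece V :=
  match l with
  | nil => OnVertex w s (s + L)
  | w' :: l' =>
      if Rle_dec t (s + L) then OnVertex w s (s + L)
      else if Rlt_dec t (s + 2 * L) then OnEdge w w' (s + L) (s + 2 * L)
      else layout w' l' (s + 2 * L) L t
  end.

Definition slots (l : list V) : R := INR (2 * length l + 1).

Lemma slots_cons a l : slots (a :: l) = slots l + 2.
Proof.
  unfold slots. simpl length.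
  replace (2 * S (length l) + 1)%nat with (S (S (2 * length l + 1))) by lia.
  rewrite !S_INR. lra.
Qed.

Lemma slots_ge1 l : 1 <= slots l.
Proof.
  unfold slots. rewrite plus_INR. simpl (INR 1).
  assert (0 <= INR (2 * length l)) by apply pos_INR. lra.
Qed.

Lemma slots_pos l : 0 < slots l.
Proof. assert (H := slots_ge1 l). lra. Qed.

Lemma layout_cons_vertex w w' l s L t : t <= s + L ->
  layout w (w' :: l) s L t = OnVertex w s (s + L).
Proof. intros H. simpl. destruct (Rle_dec t (s + L)); [auto|lra]. Qed.

Lemma layout_cons_edge w w' l s L t : s + L < t < s + 2 * L ->
  layout w (w' :: l) s L t = OnEdge w w' (s + L) (s + 2 * L).
Proof.
  intros H. simpl. destruct (Rle_dec t (s + L)); [lra|].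
  destruct (Rlt_dec t (s + 2 * L)); [auto|lra].
Qed.

Lemma layout_cons_shift w w' l s L t : 0 < L -> s + 2 * L <= t ->
  layout w (w' :: l) s L t = layout w' l (s + 2 * L) L t.
Proof.
  intros HL H. simpl. destruct (Rle_dec t (s + L)); [lra|].
  destruct (Rlt_dec t (s + 2 * L)); [lra|auto].
Qed.

Lemma layout_start w l s L : 0 < L -> layout w l s L s = OnVertex w s (s + L).
Proof. intros HL. destruct l; [auto|]. apply layout_cons_vertex; lra. Qed.

Lemma layout_end w l s L t : 0 < L -> t = s + slots l * L ->
  layout w l s L t = OnVertex (last l w) (t - L) t.
Proof.
  revert w s; induction l as [|a l IH]; intros w s HL Ht.
  - simpl. unfold slots in Ht; simpl in Ht. f_equal; lra.
  - rewrite slots_cons in Ht. assert (H1 := slots_ge1 l).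
    rewrite layout_cons_shift by (auto; nra). rewrite last_cons. apply IH; auto. lra.
Qed.

Definition layout_piece_ok (w : V) (l : list V) (s L t : R) (p : piece V) : Prop :=
  match p with
  | OnVertex x a b => b = a + L /\ s <= a <= t /\ t <= b <= s + slots l * L /\
      In x (w :: l) /\ (a = s \/ s + 2 * L <= a) /\
      (forall t', a <= t' <= b -> layout w l s L t' = OnVertex x a b) /\
      (a = s -> x = w) /\ (b = s + slots l * L -> x = last l w) /\
      (s < a -> exists y, E y x /\ In y (w :: l) /\
         forall t', a - L < t' < a -> layout w l s L t' = OnEdge y x (a - L) a) /\
      (b < s + slots l * L -> b + 2 * L <= s + slots l * L /\ exists y, E x y /\
         In y (w :: l) /\ forall t', b < t' < b + L -> layout w l s L t' = OnEdge x y b (b + L))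
  | OnEdge x y a b => b = a + L /\ s + L <= a /\ a < t < b /\ b + L <= s + slots l * L /\
      E x y /\ In x (w :: l) /\ In y (w :: l) /\
      (forall t', a < t' < b -> layout w l s L t' = OnEdge x y a b) /\
      layout w l s L a = OnVertex x (a - L) a /\ layout w l s L b = OnVertex y b (b + L)
  end.

Lemma layout_ok w l s L t : 0 < L -> walk E w l -> s <= t <= s + slots l * L ->
  layout_piece_ok w l s L t (layout w l s L t).
Proof.
  revert w s t; induction l as [|w' l IH]; intros w s t HL Hc Ht.
  - simpl. unfold slots in *; simpl in *. repeat split; try lra; auto.
    all: intros; exfalso; lra.
  - assert (H1 := slots_ge1 l). rewrite slots_cons in Ht. destruct Hc as [Hww' Hc].
    destruct (Rle_dec t (s + L)) as [Ha|Ha]; [|destruct (Rlt_dec t (s + 2 * L)) as [Hb|Hb]].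
    + rewrite layout_cons_vertex by lra. unfold layout_piece_ok. rewrite slots_cons.
      repeat split; try lra; try (intros; nra); cbn [In]; auto.
      * intros t' Ht'. apply layout_cons_vertex; lra.
      * exists w'. repeat split; cbn [In]; auto. intros t' Ht'.
        rewrite layout_cons_edge by lra. f_equal; lra.
    + rewrite layout_cons_edge by lra. unfold layout_piece_ok. rewrite slots_cons.
      repeat split; try lra; try nra; cbn [In]; auto.
      * intros t' Ht'. apply layout_cons_edge; lra.
      * rewrite layout_cons_vertex by lra. f_equal; lra.
      * rewrite layout_cons_shift by (auto; lra). apply layout_start; auto.
    + assert (Hshift : forall t', s + 2 * L <= t' ->
                layout w (w' :: l) s L t' = layout w' l (s + 2 * L) L t')
        by (intros; apply layout_cons_shift; auto).
      rewrite Hshift by lra.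
      specialize (IH w' (s + 2 * L) t HL Hc ltac:(lra)).
      destruct (layout w' l (s + 2 * L) L t) as [x a b|x y a b];
        unfold layout_piece_ok in *; rewrite slots_cons.
      * destruct IH as (Hb' & Ha1 & Hb1 & Hin & Has & Hcons & Hfirst & Hlast & Hleft & Hright).
        repeat split; try lra.
        -- cbn [In] in *; tauto.
        -- intros t' Ht''. rewrite Hshift by lra. auto.
        -- intros Hbe. rewrite last_cons. apply Hlast. lra.
        -- intros Hsa. destruct Has as [Has|Has].
           ++ subst a. rewrite (Hfirst eq_refl). exists w. repeat split; cbn [In]; auto.
              intros t' Ht''. rewrite layout_cons_edge by lra. f_equal; lra.
           ++ destruct (Hleft ltac:(lra)) as [y [Hy [Hiny Hy']]]. exists y.
              repeat split; auto; [cbn [In] in *; tauto|].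
              intros t' Ht''. rewrite Hshift by lra. auto.
        -- destruct (Hright ltac:(lra)) as [Hb2 [y [Hy [Hiny Hy']]]]. exists y.
           repeat split; auto; [cbn [In] in *; tauto|].
           intros t' Ht''. rewrite Hshift by lra. auto.
      * destruct IH as (Hb' & Ha1 & Hab & Hb1 & Hxy & Hinx & Hiny & Hcons & Hpa & Hpb).
        repeat split; try lra; auto; try (cbn [In] in *; tauto); try (rewrite Hshift by lra; auto).
        intros t' Ht''. rewrite Hshift by lra. auto.
Qed.

Lemma layout_covers w l s L x : 0 < L -> In x (w :: l) ->
  exists t, s <= t <= s + slots l * L /\ exists a b, layout w l s L t = OnVertex x a b.
Proof.
  revert w s; induction l as [|w' l IH]; intros w s HL Hx.
  - destruct Hx as [<-|[]]. exists s. unfold slots; simpl. split; [lra|eauto].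
  - assert (H1 := slots_ge1 (w' :: l)). destruct Hx as [<-|Hx].
    + exists s. split; [nra|]. rewrite layout_start; eauto.
    + destruct (IH w' (s + 2 * L) HL Hx) as [t [Ht Hp]]. exists t.
      rewrite slots_cons. split; [lra|]. rewrite layout_cons_shift by (auto; lra). auto.
Qed.

End Layout.

(** * Ends and the topology of |D| *)

Section Ends.
Context {V : Type} (E : V -> V -> Prop).

Lemma tail_in_common (r : nat -> V) (C1 C2 : V -> Prop) :
  tail_in r C1 -> tail_in r C2 -> exists z, C1 z /\ C2 z.
Proof. intros [K1 H1] [K2 H2]. exists (r (Nat.max K1 K2)). split; [apply H1|apply H2]; lia. Qed.

Lemma tail_in_mono (r : nat -> V) (C1 C2 : V -> Prop) :
  (forall z, C1 z -> C2 z) -> tail_in r C1 -> tail_in r C2.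
Proof. intros H [K HK]; exists K; auto. Qed.

Lemma end_has_ray w : is_end E w -> exists r, w r.
Proof.
  intros [r0 [Hs Hw]]. exists r0. apply Hw. split; auto. intros X HX.
  destruct (proj2 Hs X HX) as [C [HC Ht]]. exists C; auto.
Qed.

Lemma end_lives_somewhere w X : is_end E w -> finite_set X -> exists C, lives E X w C.
Proof.
  intros [r0 [Hs Hw]] HX. destruct (proj2 Hs X HX) as [C [HC Ht]]. exists C. split; auto.
  intros r Hr. apply Hw in Hr. destruct Hr as [_ Heq].
  destruct (Heq X HX) as [C' [HC' [Ht1 Ht2]]].
  destruct (tail_in_common Ht Ht1) as [z [Hz Hz']].
  eapply tail_in_mono; [|exact Ht2]. intros y. apply (scomp_unique HC' HC Hz' Hz).
Qed.

Lemma lives_unique w X C C' : is_end E w -> lives E X w C -> lives E X w C' ->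
  forall y, C y -> C' y.
Proof.
  intros Hw [HC Ht] [HC' Ht'] y Hy. destruct (end_has_ray Hw) as [r Hr].
  destruct (tail_in_common (Ht r Hr) (Ht' r Hr)) as [z [Hz Hz']].
  apply (scomp_unique HC HC' Hz Hz' Hy).
Qed.

Lemma valid_point_inhabited (p : @point V) : valid_point E p -> exists v : V, True.
Proof.
  intros Hv. destruct p as [[a|w]|[a|w] y r]; simpl in Hv; try (exists a; auto; fail).
  - destruct (end_has_ray Hv) as [r Hr]. exists (r 0%nat); auto.
  - destruct Hv as [Hd _]. assert (Hw : is_end E w) by (destruct y; simpl in Hd; tauto).
    destruct (end_has_ray Hw) as [r0 Hr0]. exists (r0 0%nat); auto.
Qed.

End Ends.

Lemma Rabs_sub_triang a b c : Rabs (a - c) <= Rabs (a - b) + Rabs (b - c).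
Proof. replace (a - c) with ((a - b) + (b - c)) by ring. apply Rabs_triang. Qed.

Lemma ratio_in_01 a b t : a < t < b -> 0 < (t - a) / (b - a) < 1.
Proof.
  intros H. set (r := (t - a) / (b - a)).
  assert (Hr : r * (b - a) = t - a) by (unfold r; field; lra). split; nra.
Qed.

Lemma ratio_gt a b t c : a < b -> b - c * (b - a) < t -> 1 - c < (t - a) / (b - a).
Proof.
  intros H1 H2. set (r := (t - a) / (b - a)).
  assert (Hr : r * (b - a) = t - a) by (unfold r; field; lra). nra.
Qed.

Lemma ratio_lt a b t c : a < b -> t < a + c * (b - a) -> (t - a) / (b - a) < c.
Proof.
  intros H1 H2. set (r := (t - a) / (b - a)).
  assert (Hr : r * (b - a) = t - a) by (unfold r; field; lra). nra.
Qed.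

Section Topology.
Context {V : Type} (E : V -> V -> Prop).

Definition near (al : R -> @point V) t (W : @point V -> Prop) : Prop :=
  exists d, 0 < d /\ forall t', 0 <= t' <= 1 -> Rabs (t' - t) < d -> W (al t').

Lemma near_Forall al t (l : list (@point V -> Prop)) : Forall (fun W => near al t W) l ->
  near al t (fun p => Forall (fun W => W p) l).
Proof.
  induction 1 as [|W l [d1 [Hd1 H1]] _ [d2 [Hd2 H2]]]; [exists 1; split; [lra|constructor]|].
  exists (Rmin d1 d2). split; [apply Rmin_pos; auto|]. intros t' Ht' Hd.
  assert (Rmin d1 d2 <= d1) by apply Rmin_l. assert (Rmin d1 d2 <= d2) by apply Rmin_r.
  constructor; [apply H1|apply H2]; auto; lra.
Qed.

Lemma continuous_path_of_near (al : R -> @point V) :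
  (forall t, unit_interval t -> valid_point E (al t)) ->
  (forall t, unit_interval t -> forall W, subbase E W -> W (al t) -> near al t W) ->
  continuous_path E al.
Proof.
  intros Hv Hn. split; auto. intros U HU t Ht [_ HUt].
  destruct (HU (al t) (Hv t Ht) HUt) as [l [Hsub [Hin Himp]]].
  assert (Hf : Forall (fun W => near al t W) l).
  { rewrite Forall_forall in Hsub, Hin |- *. intros W HW. apply Hn; [exact Ht|apply Hsub|apply Hin]; exact HW. }
  destruct (near_Forall Hf) as [d [Hd Hd']]. exists d. split; [exact Hd|].
  intros s Hs Hst. split; [exact Hs|]. apply Himp; [apply Hv|apply Hd']; exact Hs || exact Hst.
Qed.

Lemma subbase_at_node W p : subbase E W -> W (PN p) ->
  (exists v eps, W = star E v eps /\ p = NV v /\ 0 < eps) \/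
  (exists Y C eps, W = Chat E Y C eps /\ finite_set Y /\ node_in E Y C p /\ 0 < eps).
Proof.
  unfold subbase.
  intros [(v & eps & Heps & ->)|[(u & v & a & b & _ & _ & _ & ->)|[(Y & w & C & eps & HY & _ & _ & Heps & ->)|
    [(Y & w & w' & C1 & C2 & z & eps & _ & _ & _ & _ & _ & _ & _ & ->)|
    [(Y & v & w & C & z & eps & _ & _ & _ & _ & _ & _ & ->)|(Y & w & v & C & z & eps & _ & _ & _ & _ & _ & _ & ->)]]]]] Hp.
  - left. exists v, eps. repeat split; auto.
    destruct Hp as [H|[(y & r & H & _)|(x & r & H & _)]]; inversion H; auto.
  - destruct Hp as (r & H & _); discriminate.
  - right. exists Y, C, eps. repeat split; auto.
    destruct Hp as [(n & H & Hn)|(x & y & r & H & _)]; [inversion H; subst; auto|discriminate].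
  - destruct Hp as (x & y & r & H & _); discriminate.
  - destruct Hp as (y & r & H & _); discriminate.
  - destruct Hp as (x & r & H & _); discriminate.
Qed.

Lemma subbase_open_on_edge W p q r : subbase E W -> W (PI p q r) -> 0 < r < 1 ->
  exists eta, 0 < eta /\ forall r', Rabs (r' - r) < eta -> 0 < r' < 1 -> W (PI p q r').
Proof.
  unfold subbase.
  intros [(v & eps & Heps & ->)|[(u & v & a & b & _ & _ & _ & ->)|[(Y & w & C & eps & HY & _ & _ & Heps & ->)|
    [(Y & w & w' & C1 & C2 & z & eps & _ & _ & _ & _ & _ & _ & _ & ->)|
    [(Y & v & w & C & z & eps & _ & _ & _ & _ & _ & _ & ->)|(Y & w & v & C & z & eps & _ & _ & _ & _ & _ & _ & ->)]]]]] Hp Hr.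
  - destruct Hp as [H|[(y & r0 & H & Hd & Hr0)|(x & r0 & H & Hd & Hr0)]]; [discriminate| |];
      injection H; intros; subst.
    + exists (eps - r0). split; [lra|]. intros r' H1 H2. right; left. exists y, r'.
      apply Rabs_def2 in H1. repeat split; auto; lra.
    + exists (r0 - (1 - eps)). split; [lra|]. intros r' H1 H2. right; right. exists x, r'.
      apply Rabs_def2 in H1. repeat split; auto; lra.
  - destruct Hp as (r0 & H & Hr0). injection H; intros; subst.
    exists (Rmin (r0 - a) (b - r0)). split; [apply Rmin_pos; lra|].
    intros r' H1 H2. exists r'. split; auto. apply Rabs_def2 in H1.
    assert (Rmin (r0 - a) (b - r0) <= r0 - a) by apply Rmin_l.
    assert (Rmin (r0 - a) (b - r0) <= b - r0) by apply Rmin_r. lra.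
  - destruct Hp as [(n & H & _)|(x & y & r0 & H & Hd & Hr0 & Hc)]; [discriminate|].
    injection H; intros; subst.
    destruct Hc as [Hc|[(H1 & H2 & H3)|(H1 & H2 & H3)]].
    + exists 1. split; [lra|]. intros r' _ H2. right. exists x, y, r'. auto.
    + exists (eps - r0). split; [lra|]. intros r' H4 H5. apply Rabs_def2 in H4.
      right. exists x, y, r'. split; [auto|split; [auto|split; [lra|]]].
      right; left. repeat split; auto; lra.
    + exists (r0 - (1 - eps)). split; [lra|]. intros r' H4 H5. apply Rabs_def2 in H4.
      right. exists x, y, r'. split; [auto|split; [auto|split; [lra|]]].
      right; right. repeat split; auto; lra.
  - destruct Hp as (x & y & r0 & H & Hd & H1 & H2 & H3). injection H; intros; subst.
    exists (eps - Rabs (r0 - z)). split; [lra|]. intros r' H4 H5. exists x, y, r'.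
    assert (H6 := Rabs_sub_triang r' r0 z). repeat split; auto; lra.
  - destruct Hp as (y & r0 & H & Hd & H1 & H3). injection H; intros; subst.
    exists (eps - Rabs (r0 - z)). split; [lra|]. intros r' H4 H5. exists y, r'.
    assert (H6 := Rabs_sub_triang r' r0 z). repeat split; auto; lra.
  - destruct Hp as (x & r0 & H & Hd & H1 & H3). injection H; intros; subst.
    exists (eps - Rabs (r0 - z)). split; [lra|]. intros r' H4 H5. exists x, r'.
    assert (H6 := Rabs_sub_triang r' r0 z). repeat split; auto; lra.
Qed.

End Topology.

Section AffineEdge.
Context {V : Type} (E : V -> V -> Prop) (al : R -> @point V) (x y : V) (a b : R).
Hypothesis al_continuous : continuous_path E al.
Hypothesis Exy : E x y.
Hypothesis ab_in_unit : 0 <= a < b /\ b <= 1.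
Hypothesis al_a : al a = PN (NV x).
Hypothesis al_b : al b = PN (NV y).
Hypothesis al_affine : forall t, a < t < b -> al t = PI (NV x) (NV y) ((t - a) / (b - a)).

Lemma affine_edge_open_image (S : R -> Prop) : open_in (fun t => a < t < b) S ->
  exists U, openD E U /\ forall s, 0 < s < 1 ->
    (U (PI (NV x) (NV y) s) <-> exists t, a < t < b /\ S t /\ al t = PI (NV x) (NV y) s).
Proof.
  intros HS. exists (fun p => exists t0, a < t0 < b /\ S t0 /\ al t0 = p). split.
  2: { intros s0 Hs0. split; intros (t0 & H3 & H4 & H5); exists t0; auto. }
  intros p Hvp (t0 & Ht0 & HSt & <-).
  destruct (HS t0 Ht0 HSt) as [d [Hd Hd']].
  set (r0 := (t0 - a) / (b - a)). set (h := d / (b - a)).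
  assert (Hh : 0 < h) by (unfold h; apply Rdiv_lt_0_compat; lra).
  assert (Hr0 : 0 < r0 < 1) by (apply ratio_in_01; auto).
  assert (L1 := Rmax_l 0 (r0 - h)). assert (L2 := Rmax_r 0 (r0 - h)).
  assert (L3 := Rmin_l 1 (r0 + h)). assert (L4 := Rmin_r 1 (r0 + h)).
  assert (Hlo0 : Rmax 0 (r0 - h) < r0) by (apply Rmax_lub_lt; lra).
  assert (Hhi0 : r0 < Rmin 1 (r0 + h)) by (apply Rmin_glb_lt; lra).
  set (lo := Rmax 0 (r0 - h)) in *. set (hi := Rmin 1 (r0 + h)) in *.
  exists (edge_interval x y lo hi :: nil). split; [|split].
  - constructor; [|constructor]. right; left. exists x, y, lo, hi. repeat split; auto; lra.
  - constructor; [|constructor]. rewrite al_affine by auto. exists r0. split; auto.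
  - intros q Hq Hf. inversion Hf as [|? ? Hq' _]; subst. destruct Hq' as (r' & -> & Hr').
    exists (a + r' * (b - a)). split; [nra|split].
    + apply Hd'; [nra|].
      assert (Hr'h : Rabs (r' - r0) < h) by (apply Rabs_def1; lra).
      replace (a + r' * (b - a) - t0) with ((r' - r0) * (b - a)) by (unfold r0; field; lra).
      rewrite Rabs_mult, (Rabs_right (b - a)) by lra.
      unfold h in Hr'h. apply (Rmult_lt_compat_r (b - a)) in Hr'h; [|lra].
      unfold Rdiv in Hr'h. rewrite Rmult_assoc, Rinv_l in Hr'h by lra. lra.
    + rewrite al_affine by nra. f_equal. field. lra.
Qed.

Lemma affine_edge_homeo : homeo_onto_edge E al a b (NV x) (NV y).
Proof.
  split; [|split; [|split; [|split]]].
  - intros t' Ht'. exists ((t' - a) / (b - a)). split; [apply ratio_in_01; auto|auto].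
  - intros s0 Hs0. exists (a + s0 * (b - a)). split; [nra|].
    rewrite al_affine by nra. f_equal. field. lra.
  - intros t1 t2 H1 H2 Heq. rewrite !al_affine in Heq by auto. injection Heq as Heq.
    assert (Heq' : (t1 - a) / (b - a) * (b - a) = (t2 - a) / (b - a) * (b - a)) by (rewrite Heq; auto).
    field_simplify in Heq'; lra.
  - intros U HU t0 Ht0 [_ HUt].
    assert (Hu0 : unit_interval t0) by (unfold unit_interval; lra).
    destruct (proj2 al_continuous U HU t0 Hu0 (conj Hu0 HUt)) as [d [Hd Hd']].
    assert (M1 := Rmin_l d (Rmin (t0 - a) (b - t0))). assert (M2 := Rmin_r d (Rmin (t0 - a) (b - t0))).
    assert (M3 := Rmin_l (t0 - a) (b - t0)). assert (M4 := Rmin_r (t0 - a) (b - t0)).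
    exists (Rmin d (Rmin (t0 - a) (b - t0))). split; [apply Rmin_pos; [|apply Rmin_pos]; lra|].
    intros s0 Hs0 Hst. split; auto. apply (Hd' s0); [unfold unit_interval; lra|].
    apply Rabs_def2 in Hst. apply Rabs_def1; lra.
  - apply affine_edge_open_image.
Qed.

Lemma affine_edge_order : order_preserving_on al a b (NV x) (NV y).
Proof.
  intros t1 t2 H1 H12 H2.
  assert (Hco : forall t', a <= t' <= b -> edge_coord (NV x) (NV y) (al t') ((t' - a) / (b - a))).
  { intros t' Ht'. destruct (Req_dec t' a) as [->|Hna].
    - left. split; auto. unfold Rdiv. rewrite Rminus_diag. ring.
    - destruct (Req_dec t' b) as [->|Hnb].
      + right; left. split; auto. field. lra.
      + right; right. split; [apply al_affine; lra|apply ratio_in_01; lra]. }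
  exists ((t1 - a) / (b - a)), ((t2 - a) / (b - a)).
  split; [apply Hco; lra|split; [apply Hco; lra|]].
  unfold Rdiv. apply Rmult_le_compat_r; [left; apply Rinv_0_lt_compat|]; lra.
Qed.

End AffineEdge.

(** * A covering path of a strongly connected digraph *)

Section Construction.
Context {V : Type} (E : V -> V -> Prop) (v0 : V) (f : V -> nat)
  (f_inj : forall u v, f u = f v -> u = v) (hsolid : solid E).

(* [prefix n] is empty for [n = 0] and {v0} ∪ {v | f v < n} otherwise: keeping [v0]
   out of [prefix 0] but in every later [prefix n] makes stage 0 a single piece on
   [v0] whose two end slots stay on [v0] forever, which closes the path. *)
Definition prefix (n : nat) (v : V) : Prop := (0 < n)%nat /\ (v = v0 \/ (f v < n)%nat).

Lemma prefix_mono n m v : (n <= m)%nat -> prefix n v -> prefix m v.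
Proof. unfold prefix; intros H [H1 [H2|H2]]; split; try lia; auto. Qed.

Lemma prefix_S n v : prefix n v -> prefix (S n) v.
Proof. apply prefix_mono; lia. Qed.

Lemma prefix_self v : prefix (S (f v)) v.
Proof. unfold prefix; split; [lia|right; lia]. Qed.

Lemma prefix_eventually n v : (S (f v) <= n)%nat -> prefix n v.
Proof. intros H. eapply prefix_mono; [exact H|apply prefix_self]. Qed.

Lemma prefix_0 v : ~ prefix 0 v.
Proof. unfold prefix; lia. Qed.

Lemma enum_below_finite n : exists l, forall v, (f v < n)%nat -> In v l.
Proof.
  induction n as [|n [l Hl]]; [exists nil; intros; lia|].
  destruct (classic (exists v, f v = n)) as [[x Hx]|Hn].
  - exists (x :: l). intros v Hv. destruct (Nat.eq_dec (f v) n) as [e|e].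
    + left. apply f_inj; lia.
    + right; apply Hl; lia.
  - exists l. intros v Hv. apply Hl. destruct (Nat.eq_dec (f v) n); [|lia].
    exfalso; apply Hn; eauto.
Qed.

Lemma prefix_finite n : finite_set (prefix n).
Proof.
  destruct (enum_below_finite n) as [l Hl]. exists (v0 :: l).
  intros v [_ [H|H]]; [left|right]; auto.
Qed.

Lemma finite_set_in_prefix (X : V -> Prop) : finite_set X -> exists n, forall v, X v -> prefix n v.
Proof.
  intros [l Hl].
  assert (H : exists n, forall v, In v l -> prefix n v).
  { clear Hl. induction l as [|a l [n Hn]]; [exists 0%nat; intros _ []|].
    exists (Nat.max n (S (f a))). intros v [<-|Hv].
    - apply prefix_eventually; lia.
    - eapply prefix_mono; [|apply Hn; auto]; lia. }
  destruct H as [n Hn]; exists n; auto.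
Qed.

Definition refining_walk n u (l : list V) : Prop :=
  walk E u l /\ last l u = u /\ (forall z, In z (u :: l) -> ~ prefix n z) /\
  (forall y, prefix (S n) y -> sc E (prefix n) u y -> In y (u :: l)) /\
  (forall y, ~ prefix (S n) y -> sc E (prefix n) u y ->
     exists z, In z (u :: l) /\ sc E (prefix (S n)) z y).

(* Solidity is used here: the closed walk can visit each of the finitely many strong
   components of [D - prefix (S n)]. *)
Lemma refining_walk_exists n u : ~ prefix n u -> exists l, refining_walk n u l.
Proof.
  intros Hu.
  destruct (prefix_finite (S n)) as [lX HX].
  destruct (hsolid (prefix_finite (S n))) as [lr Hr].
  destruct (closed_walk_covering E (lX ++ lr) Hu) as [l [Hc [Hl [Hn Hcov]]]].
  exists l. repeat split; auto.
  - intros y Hy Hsy. apply Hcov; auto. apply in_or_app; left; auto.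
  - intros y Hy Hsy. destruct (Hr y Hy) as [c [Hc1 Hc2]]. exists c. split.
    + apply Hcov; [apply in_or_app; right; auto|].
      eapply sc_trans; eauto. apply sc_sym. eapply sc_weaken; [|eauto]. apply prefix_S.
    + auto.
Qed.

Definition refine_walk n u : list V := epsilon (inhabits nil) (refining_walk n u).

Lemma refine_walk_spec n u : ~ prefix n u -> refining_walk n u (refine_walk n u).
Proof. intros Hu. unfold refine_walk. apply epsilon_spec. apply refining_walk_exists; auto. Qed.

Lemma refine_walk_sc n u z : ~ prefix n u -> In z (u :: refine_walk n u) -> sc E (prefix n) u z.
Proof.
  intros Hu Hz. destruct (refine_walk_spec Hu) as [Hc [Hl [Hn _]]].
  destruct (walk_reach Hc Hn Hz) as [H1 H2]. rewrite Hl in H2. split; auto.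
Qed.

Definition slot_len n u s e : R := (e - s) / slots (refine_walk n u).

Lemma slot_len_pos n u s e : s < e -> 0 < slot_len n u s e.
Proof. intros H. unfold slot_len. apply Rdiv_lt_0_compat; [lra|apply slots_pos]. Qed.

Lemma slot_len_span n u s e : s + slots (refine_walk n u) * slot_len n u s e = e.
Proof. unfold slot_len. assert (H := slots_pos (refine_walk n u)). field. lra. Qed.

(* Stage [n] cuts [0,1] into pieces; at stage [n+1] the vertex piece of a vertex [u]
   outside [prefix n] is replaced by the layout of the refining walk of [u], and every
   other piece is frozen. *)
Fixpoint stage (n : nat) (t : R) : piece V :=
  match n with
  | O => OnVertex v0 0 1
  | S n' =>
    match stage n' t with
    | OnEdge x y a b => OnEdge x y a b
    | OnVertex u s e =>
      if excluded_middle_informative (prefix n' u) then OnVertex u s e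
      else layout u (refine_walk n' u) s (slot_len n' u s e) t
    end
  end.

Lemma stage_S_vertex n t u s e : stage n t = OnVertex u s e ->
  stage (S n) t = if excluded_middle_informative (prefix n u) then OnVertex u s e
                  else layout u (refine_walk n u) s (slot_len n u s e) t.
Proof. intros H; simpl; rewrite H; auto. Qed.

Lemma stage_S_frozen n t u s e : stage n t = OnVertex u s e -> prefix n u ->
  stage (S n) t = OnVertex u s e.
Proof.
  intros H Hu. rewrite (stage_S_vertex H).
  destruct (excluded_middle_informative (prefix n u)); [auto|contradiction].
Qed.

Lemma stage_S_refined n t u s e : stage n t = OnVertex u s e -> ~ prefix n u ->
  stage (S n) t = layout u (refine_walk n u) s (slot_len n u s e) t.
Proof.
  intros H Hu. rewrite (stage_S_vertex H).
  destruct (excluded_middle_informative (prefix n u)); [contradiction|auto].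
Qed.

Lemma stage_S_edge n t x y a b : stage n t = OnEdge x y a b -> stage (S n) t = OnEdge x y a b.
Proof. intros H; simpl; rewrite H; auto. Qed.

Definition stage_piece_ok n t (p : piece V) : Prop :=
  match p with
  | OnVertex u s e => 0 <= s <= t /\ t <= e <= 1 /\ s < e /\
      (forall t', s <= t' <= e -> stage n t' = OnVertex u s e) /\
      (0 < s -> exists a y, a < s /\ E y u /\
         forall t', a < t' < s -> stage n t' = OnEdge y u a s) /\
      (e < 1 -> exists b y, e < b /\ E u y /\
         forall t', e < t' < b -> stage n t' = OnEdge u y e b)
  | OnEdge x y a b => 0 <= a < t /\ t < b <= 1 /\ E x y /\
      (forall t', a < t' < b -> stage n t' = OnEdge x y a b) /\
      (exists s, stage n a = OnVertex x s a) /\ (exists e, stage n b = OnVertex y b e)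
  end.

Definition stage_wf n : Prop := forall t, 0 <= t <= 1 -> stage_piece_ok n t (stage n t).

Lemma stage_S_right_end n t u s e : stage_wf n -> 0 <= t <= 1 -> stage n t = OnVertex u s e ->
  exists s', stage (S n) e = OnVertex u s' e.
Proof.
  intros Hwf Ht H. assert (Hok := Hwf t Ht). rewrite H in Hok.
  destruct Hok as (H1 & H2 & H3 & Hcons & _).
  assert (He := Hcons e ltac:(lra)).
  destruct (classic (prefix n u)) as [Hx|Hx]; [rewrite (stage_S_frozen He Hx); eauto|].
  rewrite (stage_S_refined He Hx). destruct (refine_walk_spec Hx) as [Hc [Hl _]].
  rewrite layout_end; [rewrite Hl; eauto|apply slot_len_pos; auto|rewrite slot_len_span; auto].
Qed.

Lemma stage_S_left_end n t u s e : stage_wf n -> 0 <= t <= 1 -> stage n t = OnVertex u s e ->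
  exists e', stage (S n) s = OnVertex u s e'.
Proof.
  intros Hwf Ht H. assert (Hok := Hwf t Ht). rewrite H in Hok.
  destruct Hok as (H1 & H2 & H3 & Hcons & _).
  assert (Hs := Hcons s ltac:(lra)).
  destruct (classic (prefix n u)) as [Hx|Hx]; [rewrite (stage_S_frozen Hs Hx); eauto|].
  rewrite (stage_S_refined Hs Hx), layout_start; [eauto|apply slot_len_pos; auto].
Qed.

Lemma stage_ok_S_refined n t u s e : stage n t = OnVertex u s e -> ~ prefix n u ->
  stage_piece_ok n t (OnVertex u s e) -> stage_piece_ok (S n) t (stage (S n) t).
Proof.
  intros Hlt Hx (Hs & He & Hse & Hcons & Hleft & Hright).
  set (L := slot_len n u s e). assert (HL : 0 < L) by (apply slot_len_pos; auto).
  assert (Hspan : s + slots (refine_walk n u) * L = e) by apply slot_len_span.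
  assert (Hloc : forall t', s <= t' <= e -> stage (S n) t' = layout u (refine_walk n u) s L t')
    by (intros t' Ht'; apply stage_S_refined; auto).
  destruct (refine_walk_spec Hx) as [Hc [Hl _]].
  assert (Hp := layout_ok (s := s) (t := t) HL Hc ltac:(lra)).
  rewrite Hloc by lra. unfold layout_piece_ok in Hp. rewrite Hspan in Hp.
  destruct (layout u (refine_walk n u) s L t) as [x a b|x y a b].
  - destruct Hp as (Hb & Ha1 & Hb1 & Hin & Has & Hcn & Hfirst & Hlast & Hlf & Hrt).
    repeat split; try lra.
    + intros t' Ht'. rewrite Hloc by lra. auto.
    + intros H0. destruct (Rlt_dec s a) as [Hsa|Hsa].
      * destruct (Hlf Hsa) as [y [Hy [_ Hy']]]. exists (a - L), y.
        repeat split; auto; [lra|]. intros t' Ht'. rewrite Hloc by lra. auto.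
      * assert (a = s) by lra. subst a. rewrite (Hfirst eq_refl) in *.
        destruct (Hleft H0) as [a' [y [Ha' [Hy Hay]]]]. exists a', y; repeat split; auto.
        intros t' Ht'. apply stage_S_edge; auto.
    + intros H0. destruct (Rlt_dec b e) as [Hbe|Hbe].
      * destruct (Hrt Hbe) as [Hb2 [y [Hy [_ Hy']]]]. exists (b + L), y.
        repeat split; auto; [lra|]. intros t' Ht'. rewrite Hloc by lra. auto.
      * assert (Hbe' : b = e) by lra. rewrite (Hlast Hbe'), Hl in *. rewrite Hbe' in *.
        destruct (Hright H0) as [b' [y [Hb' [Hy Hby]]]]. exists b', y; repeat split; auto.
        intros t' Ht'. apply stage_S_edge; auto.
  - destruct Hp as (Hb & Ha1 & Hab & Hb1 & Hxy & Hinx & Hiny & Hcn & Hpa & Hpb).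
    repeat split; try lra; auto.
    + intros t' Ht'. rewrite Hloc by lra. auto.
    + exists (a - L). rewrite Hloc by lra. auto.
    + exists (b + L). rewrite Hloc by lra. auto.
Qed.

Lemma stage_wf_all n : stage_wf n.
Proof.
  induction n as [|n IH].
  - intros t Ht. simpl. repeat split; try lra; auto. all: intros; lra.
  - intros t Ht. assert (Hok := IH t Ht).
    destruct (stage n t) as [u s e|x y a b] eqn:Hlt.
    + destruct (classic (prefix n u)) as [Hx|Hx]; [|exact (stage_ok_S_refined Hlt Hx Hok)].
      rewrite (stage_S_frozen Hlt Hx).
      destruct Hok as (Hs & He & Hse & Hcons & Hleft & Hright). repeat split; try lra.
      * intros t' Ht'. apply stage_S_frozen; auto.
      * intros H0. destruct (Hleft H0) as [a [y [Ha [Hy Hay]]]].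
        exists a, y; repeat split; auto. intros; apply stage_S_edge; auto.
      * intros H0. destruct (Hright H0) as [b [y [Hb [Hy Hby]]]].
        exists b, y; repeat split; auto. intros; apply stage_S_edge; auto.
    + rewrite (stage_S_edge Hlt).
      destruct Hok as (Ha & Hb & Hxy & Hcons & [s Hsa] & [e Hbe]).
      repeat split; try lra; auto.
      * intros t' Ht'. apply stage_S_edge; auto.
      * refine (stage_S_right_end IH _ Hsa); lra.
      * refine (stage_S_left_end IH _ Hbe); lra.
Qed.

Lemma stage_ok n t : 0 <= t <= 1 -> stage_piece_ok n t (stage n t).
Proof. apply stage_wf_all. Qed.

Section NestedSequence.
Variable u : nat -> V.
Hypothesis u_avoids : forall n, ~ prefix n (u n).
Hypothesis u_sc : forall n, sc E (prefix n) (u n) (u (S n)).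

Lemma seq_sc_nested n m y : (n <= m)%nat -> sc E (prefix m) (u m) y -> sc E (prefix n) (u n) y.
Proof.
  intros Hnm. induction Hnm as [|m Hnm IH]; auto.
  intros H. apply IH. eapply sc_trans; [apply u_sc|].
  eapply sc_weaken; [|apply H]. intros; apply prefix_S; auto.
Qed.

Definition link_walk n (l : list V) : Prop :=
  walk E (u n) l /\ last l (u n) = u (S n) /\ l <> nil /\
  forall z, In z (u n :: l) -> sc E (prefix n) (u n) z.

Lemma link_walk_to n y : sc E (prefix n) (u n) y -> u n <> y ->
  exists l, walk E (u n) l /\ last l (u n) = y /\ l <> nil /\
    forall z, In z (u n :: l) -> sc E (prefix n) (u n) z.
Proof.
  intros [H1 H2] Hne. destruct (reach_walk H1) as [l [Hc [Hl Hn]]].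
  exists l. split; [auto|split; [auto|split]].
  - intros ->. simpl in Hl. auto.
  - intros z0 Hz0. destruct (walk_reach Hc Hn Hz0) as [A1 A2]. split; auto.
    rewrite Hl in A2. eapply reach_trans; eauto.
Qed.

(* When [u (S n) = u n] the link walk detours through some later [u m <> u n], so that
   every link is nonempty. *)
Lemma link_walk_exists n : exists l, link_walk n l.
Proof.
  destruct (classic (u n = u (S n))) as [Heq|Hne]; [|apply link_walk_to; auto].
  set (m := Nat.max (S n) (S (f (u n)))).
  assert (Hm : sc E (prefix n) (u n) (u m)).
  { apply (seq_sc_nested (m := m)); [lia|]. apply sc_refl; auto. }
  assert (Hne : u n <> u m).
  { intros Hx. apply (u_avoids (n := m)). rewrite <- Hx. apply prefix_eventually. lia. }
  destruct (link_walk_to Hm Hne) as [l1 [Hc1 [Hl1 [Hnil1 Hin1]]]].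
  destruct (sc_sym Hm) as [R1 _]. destruct (reach_walk R1) as [l2 [Hc2 [Hl2 Hn2]]].
  exists (l1 ++ l2). split; [|split; [|split]].
  - apply walk_app; auto. rewrite Hl1; auto.
  - rewrite last_app, Hl1, Hl2; auto.
  - destruct l1; simpl; congruence.
  - intros z0 [<-|Hz]; [apply sc_refl; auto|].
    apply in_app_or in Hz. destruct Hz as [Hz|Hz]; [apply Hin1; simpl; auto|].
    destruct (walk_reach Hc2 Hn2 (or_intror Hz)) as [A1 A2]. rewrite Hl2 in A2.
    split; auto. eapply reach_trans; [apply Hm|]; auto.
Qed.

Definition link n : list V := epsilon (inhabits nil) (link_walk n).

Lemma link_spec n : link_walk n (link n).
Proof. unfold link. apply epsilon_spec, link_walk_exists. Qed.

Lemma link_nonempty n : (0 < length (link n))%nat.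
Proof. destruct (link_spec n) as [_ [_ [H _]]]. destruct (link n); simpl; [congruence|lia]. Qed.

(* [glue_pos i = (n, j)]: the [i]-th vertex of the concatenated links is the [j]-th
   vertex of [u n :: link n]. *)
Fixpoint glue_pos (i : nat) : nat * nat :=
  match i with
  | O => (0%nat, 0%nat)
  | S i' => let (n, j) := glue_pos i' in
      if Nat.ltb (S j) (length (link n)) then (n, S j) else (S n, 0%nat)
  end.

Definition glued (i : nat) : V := let (n, j) := glue_pos i in nth j (u n :: link n) (u n).

Lemma glue_pos_valid i : (snd (glue_pos i) < length (link (fst (glue_pos i))))%nat.
Proof.
  induction i as [|i IH]; simpl; [apply link_nonempty|].
  destruct (glue_pos i) as [n j]. simpl in IH.
  destruct (Nat.ltb (S j) (length (link n))) eqn:H; [apply Nat.ltb_lt in H; simpl; auto|].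
  simpl. apply link_nonempty.
Qed.

Lemma glued_edge i : E (glued i) (glued (S i)).
Proof.
  assert (Hi := glue_pos_valid i). unfold glued. simpl. destruct (glue_pos i) as [n j].
  simpl in Hi. destruct (link_spec n) as [Hc [Hl _]].
  destruct (Nat.ltb (S j) (length (link n))) eqn:H.
  - exact (walk_nth (u n) Hc Hi).
  - apply Nat.ltb_ge in H. assert (Hj : S j = length (link n)) by lia.
    rewrite <- Hl, last_nth, <- Hj. exact (walk_nth (u n) Hc Hi).
Qed.

Lemma glued_sc i : sc E (prefix (fst (glue_pos i))) (u (fst (glue_pos i))) (glued i).
Proof.
  unfold glued. destruct (glue_pos i) as [n j]. cbn [fst snd].
  destruct (link_spec n) as [_ [_ [_ Hin]]]. apply Hin.
  destruct (Nat.lt_ge_cases j (length (u n :: link n))).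
  - apply nth_In; auto.
  - rewrite nth_overflow by auto. left; auto.
Qed.

Lemma glue_pos_level_mono i k : (i <= k)%nat -> (fst (glue_pos i) <= fst (glue_pos k))%nat.
Proof.
  induction 1; auto. etransitivity; eauto.
  simpl. destruct (glue_pos m) as [n j]. destruct (Nat.ltb _ _); simpl; lia.
Qed.

Lemma glue_pos_hits_level m : exists i, glue_pos i = (m, 0%nat).
Proof.
  induction m as [|m [i Hi]]; [exists 0%nat; auto|].
  assert (Hk : forall k, (k < length (link m))%nat -> glue_pos (i + k) = (m, k)).
  { induction k as [|k IH]; intros Hk; [rewrite Nat.add_0_r; auto|].
    rewrite Nat.add_succ_r. simpl. rewrite IH by lia.
    destruct (Nat.ltb (S k) (length (link m))) eqn:H; auto. apply Nat.ltb_ge in H. lia. }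
  assert (H' := link_nonempty m).
  exists (S (i + (length (link m) - 1))). simpl. rewrite Hk by lia.
  destruct (Nat.ltb _ _) eqn:H; auto. apply Nat.ltb_lt in H. lia.
Qed.

Lemma glue_level_tail m : exists K, forall i, (K <= i)%nat -> (m <= fst (glue_pos i))%nat.
Proof.
  destruct (glue_pos_hits_level m) as [K HK]. exists K. intros i Hi.
  assert (H := glue_pos_level_mono Hi). rewrite HK in H. auto.
Qed.

Lemma glued_finitely_often x : exists B, forall i, glued i = x -> (i < B)%nat.
Proof.
  destruct (glue_level_tail (S (f x))) as [K HK]. exists K. intros i Hi.
  destruct (Nat.lt_ge_cases i K); auto. exfalso.
  assert (H2 := glued_sc i). rewrite Hi in H2.
  apply (sc_avoids_r H2). apply prefix_eventually. auto.
Qed.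

Lemma glued_last_occurrence i : exists j, glued j = glued i /\ forall k, glued k = glued i -> (k <= j)%nat.
Proof.
  destruct (glued_finitely_often (glued i)) as [B HB].
  exact (bounded_pred_has_max (P := fun k => glued k = glued i) HB eq_refl).
Qed.

Definition last_occ (i : nat) : nat :=
  proj1_sig (constructive_indefinite_description _ (glued_last_occurrence i)).

Lemma last_occ_spec i : glued (last_occ i) = glued i /\ forall k, glued k = glued i -> (k <= last_occ i)%nat.
Proof. unfold last_occ. destruct (constructive_indefinite_description _ _) as [j Hj]. auto. Qed.

(* Jumping to last occurrences shortcuts the glued walk into a ray. *)
Fixpoint ray_pos (k : nat) : nat :=
  match k with O => last_occ 0 | S k' => last_occ (S (ray_pos k')) end.

Definition seq_ray (k : nat) : V := glued (ray_pos k).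

Lemma ray_pos_lt k : (ray_pos k < ray_pos (S k))%nat.
Proof. simpl. assert (H := proj2 (last_occ_spec (S (ray_pos k))) _ eq_refl). lia. Qed.

Lemma ray_pos_mono k k' : (k < k')%nat -> (ray_pos k < ray_pos k')%nat.
Proof. induction 1; [apply ray_pos_lt|]. etransitivity; eauto. apply ray_pos_lt. Qed.

Lemma ray_pos_ge k : (k <= ray_pos k)%nat.
Proof. induction k; [lia|]. assert (H := ray_pos_lt k). lia. Qed.

Lemma ray_pos_last k i : glued i = seq_ray k -> (i <= ray_pos k)%nat.
Proof.
  intros Hi. unfold seq_ray in Hi. destruct k as [|k]; simpl in *.
  - destruct (last_occ_spec 0) as [A B]. apply B. congruence.
  - destruct (last_occ_spec (S (ray_pos k))) as [A B]. apply B. congruence.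
Qed.

Lemma seq_ray_ray : ray E seq_ray.
Proof.
  split.
  - intros m n Hmn. destruct (Nat.lt_trichotomy m n) as [H|[H|H]]; auto; exfalso.
    + assert (H1 := ray_pos_mono H). assert (H2 := ray_pos_last (eq_sym Hmn)). lia.
    + assert (H1 := ray_pos_mono H). assert (H2 := ray_pos_last Hmn). lia.
  - intros k. unfold seq_ray. simpl. rewrite (proj1 (last_occ_spec (S (ray_pos k)))).
    apply glued_edge.
Qed.

Lemma seq_ray_tail n : tail_in seq_ray (sc E (prefix n) (u n)).
Proof.
  destruct (glue_level_tail n) as [K HK]. exists K. intros k Hk.
  eapply seq_sc_nested; [|apply glued_sc]. apply HK.
  assert (H' := ray_pos_ge k). lia.
Qed.

Lemma seq_scomp_at Y n : (forall v, Y v -> prefix n v) -> is_scomp E Y (sc E Y (u n)).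
Proof. intros HY. exists (u n). split; [intros H; apply (u_avoids (n := n)); auto|intros; tauto]. Qed.

Lemma seq_ray_solid : solid_ray E seq_ray.
Proof.
  split; [apply seq_ray_ray|]. intros Y HY. destruct (finite_set_in_prefix HY) as [n Hn].
  exists (sc E Y (u n)). split; [apply seq_scomp_at; auto|].
  eapply tail_in_mono; [|apply seq_ray_tail]. intros z; apply sc_weaken; auto.
Qed.

Definition seq_end : (nat -> V) -> Prop :=
  fun r => solid_ray E r /\ forall n, tail_in r (sc E (prefix n) (u n)).

Lemma seq_end_is_end : is_end E seq_end.
Proof.
  exists seq_ray. split; [apply seq_ray_solid|]. intros r. split.
  - intros [Hs Ht]. split; auto. intros Y HY. destruct (finite_set_in_prefix HY) as [n Hn].
    exists (sc E Y (u n)). split; [apply seq_scomp_at; auto|].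
    split; eapply tail_in_mono; try apply seq_ray_tail; try apply Ht;
      intros z Hz; eapply sc_weaken; eauto.
  - intros [Hs Heq]. split; auto. intros n.
    destruct (Heq (prefix n) (prefix_finite n)) as [C [HC [Ht1 Ht2]]].
    destruct (tail_in_common Ht1 (seq_ray_tail n)) as [z [Hz1 Hz2]].
    eapply tail_in_mono; [|apply Ht2]. intros y Hy.
    destruct HC as [c [Hc HCc]]. apply HCc in Hy. apply HCc in Hz1.
    eapply sc_trans; [apply Hz2|]. eapply sc_trans; [apply sc_sym, Hz1|]. auto.
Qed.

Lemma seq_end_lives_sub Y C n : (forall v, Y v -> prefix n v) -> lives E Y seq_end C ->
  forall y, sc E (prefix n) (u n) y -> C y.
Proof.
  intros HY [HC Hr] y Hy.
  destruct (tail_in_common (Hr seq_ray (conj seq_ray_solid seq_ray_tail)) (seq_ray_tail n))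
    as [z [Hz1 Hz2]].
  destruct HC as [c [Hc HCc]]. apply HCc. apply HCc in Hz1.
  eapply sc_trans; [apply Hz1|]. eapply sc_weaken; [apply HY|].
  eapply sc_trans; [apply sc_sym, Hz2|]. auto.
Qed.

End NestedSequence.

Lemma stage_frozen_forever n m t u s e : (n <= m)%nat -> stage n t = OnVertex u s e ->
  prefix n u -> stage m t = OnVertex u s e.
Proof.
  intros Hnm H Hx. induction Hnm as [|m Hnm IH]; auto.
  apply stage_S_frozen; auto. eapply prefix_mono; eauto.
Qed.

Lemma stage_edge_forever n m t x y a b : (n <= m)%nat -> stage n t = OnEdge x y a b ->
  stage m t = OnEdge x y a b.
Proof. intros Hnm H. induction Hnm as [|m Hnm IH]; auto. apply stage_S_edge; auto. Qed.

Lemma stage_S_vertex_parent n t u' s' e' : 0 <= t <= 1 -> stage (S n) t = OnVertex u' s' e' ->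
  exists u s e, stage n t = OnVertex u s e /\ s <= s' /\ e' <= e /\
    (~ prefix n u -> sc E (prefix n) u u') /\ (prefix n u -> u' = u /\ s' = s /\ e' = e).
Proof.
  intros Ht H. assert (Hok := stage_ok n Ht).
  destruct (stage n t) as [u s e|x y a b] eqn:Hl; [|rewrite (stage_S_edge Hl) in H; discriminate].
  exists u, s, e. split; auto. destruct Hok as (Hs & He & Hse & Hcons & _).
  destruct (classic (prefix n u)) as [Hx|Hx].
  - rewrite (stage_S_frozen Hl Hx) in H. inversion H; subst.
    split; [lra|split; [lra|split]]; [intros; contradiction|auto].
  - rewrite (stage_S_refined Hl Hx) in H.
    destruct (refine_walk_spec Hx) as [Hc _].
    assert (HL := slot_len_pos n u Hse).
    assert (Hp := layout_ok (s := s) (t := t) HL Hc). unfold layout_piece_ok in Hp.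
    rewrite slot_len_span in Hp. specialize (Hp ltac:(lra)). rewrite H in Hp.
    destruct Hp as (Hb & Ha1 & Hb1 & Hin & _).
    split; [lra|split; [lra|split]]; [intros _; apply refine_walk_sc; auto|intros; contradiction].
Qed.

Lemma stage_vertex_right_end n t u s e : 0 <= t <= 1 -> stage n t = OnVertex u s e ->
  forall m, (n <= m)%nat -> exists s', stage m e = OnVertex u s' e.
Proof.
  intros Ht H m Hm. assert (Hok := stage_ok n Ht). rewrite H in Hok.
  destruct Hok as (Hs & He & Hse & Hcons & _).
  induction Hm as [|m Hm IH]; [exists s; apply Hcons; lra|].
  destruct IH as [s' Hs']. refine (stage_S_right_end (stage_wf_all m) _ Hs'). lra.
Qed.

Lemma stage_vertex_left_end n t u s e : 0 <= t <= 1 -> stage n t = OnVertex u s e ->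
  forall m, (n <= m)%nat -> exists e', stage m s = OnVertex u s e'.
Proof.
  intros Ht H m Hm. assert (Hok := stage_ok n Ht). rewrite H in Hok.
  destruct Hok as (Hs & He & Hse & Hcons & _).
  induction Hm as [|m Hm IH]; [exists e; apply Hcons; lra|].
  destruct IH as [e' He']. refine (stage_S_left_end (stage_wf_all m) _ He'). lra.
Qed.

Definition stage_vertex n t : V :=
  match stage n t with OnVertex u _ _ => u | OnEdge u _ _ _ => u end.

Definition refined_forever t : Prop :=
  forall n, exists u s e, stage n t = OnVertex u s e /\ ~ prefix n u.

Definition end_at t := seq_end (fun n => stage_vertex n t).

Lemma refined_forever_vertex t n : refined_forever t ->
  exists s e, stage n t = OnVertex (stage_vertex n t) s e /\ ~ prefix n (stage_vertex n t).
Proof. intros H. destruct (H n) as [u [s [e [H1 H2]]]]. unfold stage_vertex. rewrite H1. eauto. Qed.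

Lemma refined_forever_nested t : 0 <= t <= 1 -> refined_forever t ->
  (forall n, ~ prefix n (stage_vertex n t)) /\
  (forall n, sc E (prefix n) (stage_vertex n t) (stage_vertex (S n) t)).
Proof.
  intros Ht H. split.
  - intros n. destruct (refined_forever_vertex n H) as [s [e [_ Hx]]]; auto.
  - intros n. destruct (refined_forever_vertex (S n) H) as [s [e [H1 _]]].
    destruct (stage_S_vertex_parent Ht H1) as [u [s0 [e0 [H2 [_ [_ [H3 _]]]]]]].
    destruct (refined_forever_vertex n H) as [s1 [e1 [H4 H5]]].
    rewrite H4 in H2. inversion H2 as [Hu]. rewrite <- Hu in H3. apply H3; auto.
Qed.

Lemma end_at_is_end t : 0 <= t <= 1 -> refined_forever t -> is_end E (end_at t).
Proof. intros Ht H. destruct (refined_forever_nested Ht H). apply seq_end_is_end; auto. Qed.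

Definition path_value t (p : @point V) : Prop :=
  (exists n u s e, stage n t = OnVertex u s e /\ prefix n u /\ p = PN (NV u)) \/
  (exists n x y a b, stage n t = OnEdge x y a b /\ p = PI (NV x) (NV y) ((t - a) / (b - a))) \/
  (refined_forever t /\ p = PN (NE (end_at t))).

Lemma path_value_exists t : exists p, path_value t p.
Proof.
  destruct (classic (exists n u s e, stage n t = OnVertex u s e /\ prefix n u))
    as [[n [u [s [e [H1 H2]]]]]|H]; [exists (PN (NV u)); left; exists n, u, s, e; auto|].
  destruct (classic (exists n x y a b, stage n t = OnEdge x y a b)) as [[n [x [y [a [b H1]]]]]|H'].
  - eexists. right; left. exists n, x, y, a, b; eauto.
  - exists (PN (NE (end_at t))). right; right. split; auto. intros n.
    destruct (stage n t) as [u s e|x y a b] eqn:Hl.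
    + exists u, s, e. split; auto. intros Hx. apply H; eauto 6.
    + exfalso; apply H'; eauto 6.
Qed.

Lemma path_value_unique t p q : path_value t p -> path_value t q -> p = q.
Proof.
  intros [[n1 [u1 [s1 [e1 [H1 [X1 ->]]]]]]|[[n1 [x1 [y1 [a1 [b1 [H1 ->]]]]]]|[I1 ->]]]
         [[n2 [u2 [s2 [e2 [H2 [X2 ->]]]]]]|[[n2 [x2 [y2 [a2 [b2 [H2 ->]]]]]]|[I2 ->]]];
  try set (m := Nat.max n1 n2);
  try (assert (A1 := @stage_frozen_forever n1 m t _ _ _ ltac:(lia) H1 X1));
  try (assert (A1 := @stage_edge_forever n1 m t _ _ _ _ ltac:(lia) H1));
  try (assert (A2 := @stage_frozen_forever n2 m t _ _ _ ltac:(lia) H2 X2));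
  try (assert (A2 := @stage_edge_forever n2 m t _ _ _ _ ltac:(lia) H2));
  try (rewrite A1 in A2; inversion A2; auto; fail).
  - destruct (I2 n1) as [u [s [e [H3 H4]]]]. rewrite H1 in H3; inversion H3; subst; contradiction.
  - destruct (I2 n1) as [u [s [e [H3 H4]]]]. rewrite H1 in H3; discriminate.
  - destruct (I1 n2) as [u [s [e [H3 H4]]]]. rewrite H2 in H3; inversion H3; subst; contradiction.
  - destruct (I1 n2) as [u [s [e [H3 H4]]]]. rewrite H2 in H3; discriminate.
  - auto.
Qed.

Definition cover_path (t : R) : @point V := epsilon (inhabits (PN (NV v0))) (path_value t).

Lemma cover_path_eq t p : path_value t p -> cover_path t = p.
Proof.
  intros H. apply (path_value_unique (t := t)); auto.
  unfold cover_path. apply epsilon_spec. exists p; auto.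
Qed.

Lemma cover_path_value t : path_value t (cover_path t).
Proof. destruct (path_value_exists t) as [p Hp]. rewrite (cover_path_eq Hp). auto. Qed.

Lemma cover_path_vertex t n u s e : stage n t = OnVertex u s e -> prefix n u ->
  cover_path t = PN (NV u).
Proof. intros; apply cover_path_eq; left; eauto 7. Qed.

Lemma cover_path_edge t n x y a b : stage n t = OnEdge x y a b ->
  cover_path t = PI (NV x) (NV y) ((t - a) / (b - a)).
Proof. intros; apply cover_path_eq; right; left; eauto 8. Qed.


Lemma stage_descendant_sc m t u s e : 0 <= t <= 1 -> stage m t = OnVertex u s e -> ~ prefix m u ->
  forall k, (m <= k)%nat -> forall y s' e', stage k t = OnVertex y s' e' -> sc E (prefix m) u y.
Proof.
  intros Ht Hm Hu k Hk. induction Hk as [|k Hk IH]; intros y s' e' Hy.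
  - rewrite Hm in Hy. inversion Hy; subst. apply sc_refl; auto.
  - destruct (stage_S_vertex_parent Ht Hy) as [w [s0 [e0 [Hw [_ [_ [H1 H2]]]]]]].
    assert (Hmw := IH _ _ _ Hw).
    destruct (classic (prefix k w)) as [Hx|Hx]; [destruct (H2 Hx) as [-> _]; auto|].
    eapply sc_trans; [apply Hmw|]. eapply sc_weaken; [|apply H1; auto].
    intros; eapply prefix_mono; eauto.
Qed.

Lemma stage_descendant_edge_sc m t u s e : 0 <= t <= 1 -> stage m t = OnVertex u s e ->
  ~ prefix m u -> forall k, (m <= k)%nat -> forall x y a b, stage k t = OnEdge x y a b ->
  sc E (prefix m) u x /\ sc E (prefix m) u y.
Proof.
  intros Ht Hm Hu k Hk. induction Hk as [|k Hk IH]; intros x y a b Hy; [congruence|].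
  destruct (stage k t) as [w s0 e0|x' y' a' b'] eqn:Hl;
    [|rewrite (stage_S_edge Hl) in Hy; inversion Hy; subst; eapply IH; eauto].
  assert (Hmw := stage_descendant_sc Ht Hm Hu Hk Hl).
  destruct (classic (prefix k w)) as [Hx|Hx]; [rewrite (stage_S_frozen Hl Hx) in Hy; discriminate|].
  rewrite (stage_S_refined Hl Hx) in Hy.
  assert (Hok := stage_ok k Ht). rewrite Hl in Hok. destruct Hok as (Hs & He & Hse & _).
  destruct (refine_walk_spec Hx) as [Hc _].
  assert (Hp := layout_ok (s := s0) (t := t) (slot_len_pos k w Hse) Hc).
  unfold layout_piece_ok in Hp. rewrite slot_len_span in Hp.
  specialize (Hp ltac:(lra)). rewrite Hy in Hp.
  destruct Hp as (_ & _ & _ & _ & _ & Hinx & Hiny & _).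
  assert (Hmono : forall z, sc E (prefix k) w z -> sc E (prefix m) w z)
    by (intros z; apply sc_weaken; intros; eapply prefix_mono; eauto).
  split; eapply sc_trans; eauto; apply Hmono; apply refine_walk_sc; auto.
Qed.

Lemma cover_path_in_component m t u s e : 0 <= t <= 1 -> stage m t = OnVertex u s e ->
  ~ prefix m u ->
  (exists y, cover_path t = PN (NV y) /\ sc E (prefix m) u y) \/
  (exists x y r, cover_path t = PI (NV x) (NV y) r /\ E x y /\ 0 < r < 1 /\
     sc E (prefix m) u x /\ sc E (prefix m) u y) \/
  (refined_forever t /\ stage_vertex m t = u /\ cover_path t = PN (NE (end_at t))).
Proof.
  intros Ht Hm Hu. destruct (path_value_exists t) as [p Hp].
  assert (Ha := cover_path_eq Hp).
  destruct Hp as [[n [y [s1 [e1 [H1 [H2 ->]]]]]]|[[n [x [y [a [b [H1 ->]]]]]]|[H1 ->]]].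
  - left. exists y. split; auto.
    destruct (Nat.le_gt_cases m n) as [Hmn|Hmn]; [eapply stage_descendant_sc; eauto|].
    assert (H3 := stage_frozen_forever (n := n) (m := m) ltac:(lia) H1 H2). rewrite Hm in H3.
    inversion H3; subst. exfalso; apply Hu. eapply prefix_mono; [|apply H2]. lia.
  - right; left. exists x, y, ((t - a) / (b - a)). split; auto.
    assert (Hok := stage_ok n Ht). rewrite H1 in Hok. destruct Hok as (Ha1 & Hb1 & Hxy & _).
    split; [auto|split; [apply ratio_in_01; lra|]].
    destruct (Nat.le_gt_cases m n) as [Hmn|Hmn]; [eapply stage_descendant_edge_sc; eauto|].
    assert (H3 := stage_edge_forever (n := n) (m := m) ltac:(lia) H1). congruence.
  - right; right. split; [auto|split; auto]. unfold stage_vertex. rewrite Hm; auto.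
Qed.

Lemma stage_vertex_left_approach n t u s e eps : 0 <= t <= 1 -> stage n t = OnVertex u s e ->
  0 < eps -> exists d, 0 < d /\ forall t', 0 <= t' -> t' < s -> t - d < t' ->
  exists y r, cover_path t' = PI (NV y) (NV u) r /\ E y u /\ 0 < r < 1 /\ 1 - eps < r.
Proof.
  intros Ht Hl Heps. assert (Hok := stage_ok n Ht). rewrite Hl in Hok.
  destruct Hok as (Hs & He & Hse & Hcons & Hleft & _).
  destruct (Rlt_dec 0 s) as [Hs0|Hs0]; [|exists 1; split; [lra|intros; lra]].
  set (c := Rmin eps 1). assert (Hc1 : 0 < c) by (apply Rmin_pos; lra).
  assert (Hc2 : c <= eps) by apply Rmin_l. assert (Hc3 : c <= 1) by apply Rmin_r.
  destruct (Hleft Hs0) as [a [y [Ha [Hy Hay]]]].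
  exists (t - s + c * (s - a)). split; [nra|]. intros t' H1 H2 H3.
  assert (Ht' : a < t' < s) by nra.
  exists y, ((t' - a) / (s - a)). split; [apply cover_path_edge with (n := n); auto|].
  split; [auto|split; [apply ratio_in_01; auto|]].
  assert (1 - c < (t' - a) / (s - a)) by (apply ratio_gt; lra). lra.
Qed.

Lemma stage_vertex_right_approach n t u s e eps : 0 <= t <= 1 -> stage n t = OnVertex u s e ->
  0 < eps -> exists d, 0 < d /\ forall t', t' <= 1 -> e < t' -> t' < t + d ->
  exists y r, cover_path t' = PI (NV u) (NV y) r /\ E u y /\ 0 < r < 1 /\ r < eps.
Proof.
  intros Ht Hl Heps. assert (Hok := stage_ok n Ht). rewrite Hl in Hok.
  destruct Hok as (Hs & He & Hse & Hcons & _ & Hright).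
  destruct (Rlt_dec e 1) as [He0|He0]; [|exists 1; split; [lra|intros; lra]].
  set (c := Rmin eps 1). assert (Hc1 : 0 < c) by (apply Rmin_pos; lra).
  assert (Hc2 : c <= eps) by apply Rmin_l. assert (Hc3 : c <= 1) by apply Rmin_r.
  destruct (Hright He0) as [b [y [Hb [Hy Hby]]]].
  exists (e - t + c * (b - e)). split; [nra|]. intros t' H1 H2 H3.
  assert (Ht' : e < t' < b) by nra.
  exists y, ((t' - e) / (b - e)). split; [apply cover_path_edge with (n := n); auto|].
  split; [auto|split; [apply ratio_in_01; auto|]].
  assert ((t' - e) / (b - e) < c) by (apply ratio_lt; lra). lra.
Qed.

Lemma cover_path_near_frozen_vertex t n u s e eps : 0 <= t <= 1 -> stage n t = OnVertex u s e ->
  prefix n u -> 0 < eps ->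
  exists d, 0 < d /\ forall t', 0 <= t' <= 1 -> Rabs (t' - t) < d ->
    cover_path t' = PN (NV u) \/
    (exists y r, cover_path t' = PI (NV u) (NV y) r /\ E u y /\ 0 < r < 1 /\ r < eps) \/
    (exists y r, cover_path t' = PI (NV y) (NV u) r /\ E y u /\ 0 < r < 1 /\ 1 - eps < r).
Proof.
  intros Ht Hl Hx Heps. assert (Hok := stage_ok n Ht). rewrite Hl in Hok.
  destruct Hok as (Hs & He & Hse & Hcons & _).
  destruct (stage_vertex_left_approach Ht Hl Heps) as [dL [HdL HL]].
  destruct (stage_vertex_right_approach Ht Hl Heps) as [dR [HdR HR]].
  exists (Rmin dL dR). split; [apply Rmin_pos; auto|].
  intros t' Ht' Hd. apply Rabs_def2 in Hd.
  assert (Rmin dL dR <= dL) by apply Rmin_l. assert (Rmin dL dR <= dR) by apply Rmin_r.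
  destruct (Rlt_dec t' s) as [H1|H1]; [right; right; apply HL; lra|].
  destruct (Rlt_dec e t') as [H2|H2]; [right; left; apply HR; lra|].
  left. apply cover_path_vertex with (n := n) (s := s) (e := e); auto. apply Hcons; lra.
Qed.

(* If the vertex pieces containing [t] all started at [t] from stage [N] on, then the
   vertex at [t] would never change, although it eventually enters [prefix n]. *)
Lemma refined_forever_left_gap t N : 0 <= t <= 1 -> refined_forever t ->
  exists m s e, (N <= m)%nat /\ stage m t = OnVertex (stage_vertex m t) s e /\ s < t.
Proof.
  intros Ht Hend. apply NNPP. intros Hno.
  assert (Hk : forall k, stage_vertex (N + k) t = stage_vertex N t).
  { induction k as [|k IH]; [rewrite Nat.add_0_r; auto|].
    destruct (refined_forever_vertex (N + k) Hend) as [s [e [H1 H2]]].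
    assert (Hok := stage_ok (N + k) Ht). rewrite H1 in Hok. destruct Hok as (Hs & He & Hse & _).
    assert (Hst : s = t).
    { apply Rle_antisym; [lra|]. apply Rnot_lt_le. intros Hlt. apply Hno.
      exists (N + k)%nat, s, e. split; [lia|auto]. }
    subst s. rewrite <- IH, Nat.add_succ_r. unfold stage_vertex at 1.
    rewrite (stage_S_refined H1 H2), layout_start by (apply slot_len_pos; auto).
    unfold stage_vertex; rewrite H1; auto. }
  destruct (refined_forever_vertex (N + S (f (stage_vertex N t))) Hend) as [s [e [_ H2]]].
  rewrite Hk in H2. apply H2, prefix_eventually. lia.
Qed.

Lemma refined_forever_right_gap t N : 0 <= t <= 1 -> refined_forever t ->
  exists m s e, (N <= m)%nat /\ stage m t = OnVertex (stage_vertex m t) s e /\ t < e.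
Proof.
  intros Ht Hend. apply NNPP. intros Hno.
  assert (Hk : forall k, stage_vertex (N + k) t = stage_vertex N t).
  { induction k as [|k IH]; [rewrite Nat.add_0_r; auto|].
    destruct (refined_forever_vertex (N + k) Hend) as [s [e [H1 H2]]].
    assert (Hok := stage_ok (N + k) Ht). rewrite H1 in Hok. destruct Hok as (Hs & He & Hse & _).
    assert (Het : e = t).
    { apply Rle_antisym; [|lra]. apply Rnot_lt_le. intros Hlt. apply Hno.
      exists (N + k)%nat, s, e. split; [lia|auto]. }
    rewrite <- IH, Nat.add_succ_r. unfold stage_vertex at 1.
    rewrite (stage_S_refined H1 H2). destruct (refine_walk_spec H2) as [_ [Hl _]].
    rewrite layout_end; [rewrite Hl|apply slot_len_pos; auto|rewrite slot_len_span; auto].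
    unfold stage_vertex; rewrite H1; auto. }
  destruct (refined_forever_vertex (N + S (f (stage_vertex N t))) Hend) as [s [e [_ H2]]].
  rewrite Hk in H2. apply H2, prefix_eventually. lia.
Qed.

Lemma end_region_in_Chat t Y C eps N : 0 <= t <= 1 -> refined_forever t ->
  (forall v, Y v -> prefix N v) -> lives E Y (end_at t) C ->
  forall m s e t', (N <= m)%nat -> 0 <= t' <= 1 ->
  stage m t' = OnVertex (stage_vertex m t) s e -> Chat E Y C eps (cover_path t').
Proof.
  intros Ht Hend HN Hlv m s e t' Hm Ht' Hl.
  destruct (refined_forever_nested Ht Hend) as [Hu1 Hu2].
  assert (Hin : forall y, sc E (prefix m) (stage_vertex m t) y -> C y).
  { intros y Hy. apply (seq_end_lives_sub Hu1 Hu2 HN Hlv). exact (seq_sc_nested Hu2 Hm Hy). }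
  destruct (cover_path_in_component Ht' Hl (Hu1 m))
    as [(y & Hy & Hsy)|[(x & y & r & Hr & Hxy & Hr1 & Hsx & Hsy)|(Hend' & Hnu & Hal)]].
  - rewrite Hy. left. exists (NV y). split; auto. apply Hin; auto.
  - rewrite Hr. right. exists (NV x), (NV y), r. repeat split; auto; try lra.
    left. split; apply Hin; auto.
  - rewrite Hal. left. exists (NE (end_at t')). split; auto. split; [apply end_at_is_end; auto|].
    split; [exact (proj1 Hlv)|]. intros r [_ Hr]. specialize (Hr m). cbv beta in Hr.
    rewrite Hnu in Hr. eapply tail_in_mono; [|exact Hr]. auto.
Qed.

Lemma cover_path_near_end t Y C eps : 0 <= t <= 1 -> refined_forever t -> finite_set Y ->
  lives E Y (end_at t) C -> near (cover_path) t (Chat E Y C eps).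
Proof.
  intros Ht Hend HY Hlv. destruct (finite_set_in_prefix HY) as [N HN].
  destruct (refined_forever_left_gap N Ht Hend) as [m1 [s1 [e1 [Hm1 [Hl1 Hs1]]]]].
  destruct (refined_forever_right_gap N Ht Hend) as [m2 [s2 [e2 [Hm2 [Hl2 He2]]]]].
  assert (H1 := stage_ok m1 Ht). rewrite Hl1 in H1. destruct H1 as (A1 & B1 & C1 & D1 & _).
  assert (H2 := stage_ok m2 Ht). rewrite Hl2 in H2. destruct H2 as (A2 & B2 & C2 & D2 & _).
  exists (Rmin (t - s1) (e2 - t)). split; [apply Rmin_pos; lra|].
  intros t' Ht' Hd. apply Rabs_def2 in Hd.
  assert (Rmin (t - s1) (e2 - t) <= t - s1) by apply Rmin_l.
  assert (Rmin (t - s1) (e2 - t) <= e2 - t) by apply Rmin_r.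
  destruct (Rle_dec t' t).
  - refine (end_region_in_Chat eps Ht Hend HN Hlv Hm1 Ht' (D1 t' _)). lra.
  - refine (end_region_in_Chat eps Ht Hend HN Hlv Hm2 Ht' (D2 t' _)). lra.
Qed.

Lemma cover_path_near_edge t n x y a b W : 0 <= t <= 1 -> stage n t = OnEdge x y a b ->
  subbase E W -> W (cover_path t) -> near cover_path t W.
Proof.
  intros Ht Hl HW Hw. assert (Hok := stage_ok n Ht). rewrite Hl in Hok.
  destruct Hok as (Ha & Hb & Hxy & Hcons & _).
  rewrite (cover_path_edge Hl) in Hw.
  destruct (subbase_open_on_edge HW Hw (@ratio_in_01 a b t ltac:(lra))) as [eta [Heta Hw']].
  exists (Rmin (Rmin (t - a) (b - t)) (eta * (b - a))).
  split; [apply Rmin_pos; [apply Rmin_pos; lra|nra]|].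
  intros t' Ht' Hd. apply Rabs_def2 in Hd.
  assert (M1 := Rmin_l (Rmin (t - a) (b - t)) (eta * (b - a))).
  assert (M2 := Rmin_r (Rmin (t - a) (b - t)) (eta * (b - a))).
  assert (M3 := Rmin_l (t - a) (b - t)). assert (M4 := Rmin_r (t - a) (b - t)).
  rewrite (cover_path_edge (Hcons t' ltac:(lra))).
  apply Hw'; [|apply ratio_in_01; lra].
  replace ((t' - a) / (b - a) - (t - a) / (b - a)) with ((t' - t) / (b - a)) by (field; lra).
  set (q := (t' - t) / (b - a)). assert (Hq : q * (b - a) = t' - t) by (unfold q; field; lra).
  apply Rabs_def1; nra.
Qed.

Lemma cover_path_near_subbase t W : 0 <= t <= 1 -> subbase E W -> W (cover_path t) ->
  near cover_path t W.
Proof.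
  intros Ht HW Hw. assert (Hp := cover_path_value t).
  destruct Hp as [[n [u [s [e [H1 [H2 Hal]]]]]]|[[n [x [y [a [b [H1 _]]]]]]|[H1 Hal]]];
    [|eapply cover_path_near_edge; eauto|];
    rewrite Hal in Hw; destruct (subbase_at_node HW Hw)
      as [(v & eps & -> & Hv & Heps)|(Y & C & eps & -> & HY & Hn & Heps)]; try discriminate.
  - injection Hv as <-.
    destruct (cover_path_near_frozen_vertex Ht H1 H2 Heps) as [d [Hd Hd']]. exists d. split; auto.
    intros t' Ht' Htt.
    destruct (Hd' t' Ht' Htt) as [Ha|[(y & r & Ha & Hy & Hr & Hr')|(y & r & Ha & Hy & Hr & Hr')]];
      rewrite Ha; [left; auto|right; left|right; right]; exists (NV y), r; repeat split; auto; lra.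
  - destruct (cover_path_near_frozen_vertex Ht H1 H2 Heps) as [d [Hd Hd']]. exists d. split; auto.
    intros t' Ht' Htt.
    destruct (Hd' t' Ht' Htt) as [Ha|[(y & r & Ha & Hy & Hr & Hr')|(y & r & Ha & Hy & Hr & Hr')]];
      rewrite Ha; [left; exists (NV u); auto| |].
    + right. exists (NV u), (NV y), r. split; [auto|split; [exact Hy|split; [auto|]]].
      destruct (classic (C y)); [left|right; left]; simpl; auto.
    + right. exists (NV y), (NV u), r. split; [auto|split; [exact Hy|split; [auto|]]].
      destruct (classic (C y)); [left|right; right]; simpl; auto.
  - destruct Hn as [_ Hlv]. apply cover_path_near_end; auto.
Qed.

Lemma cover_path_valid t : unit_interval t -> valid_point E (cover_path t).
Proof.
  intros Ht. assert (Hp := cover_path_value t).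
  destruct Hp as [[n [u [s [e [H1 [H2 ->]]]]]]|[[n [x [y [a [b [H1 ->]]]]]]|[H1 ->]]].
  - simpl; auto.
  - assert (Hok := stage_ok n Ht). rewrite H1 in Hok. destruct Hok as (Ha & Hb & Hxy & _).
    split; [auto|apply ratio_in_01; lra].
  - apply end_at_is_end; auto.
Qed.

Lemma cover_path_continuous : continuous_path E cover_path.
Proof.
  apply continuous_path_of_near; [apply cover_path_valid|].
  intros t Ht W HW Hw. apply cover_path_near_subbase; auto.
Qed.

Lemma cover_path_piece_ends n t u s e : 0 <= t <= 1 -> stage n t = OnVertex u s e ->
  cover_path s = PN (NV u) /\ cover_path e = PN (NV u).
Proof.
  intros Ht Hl. set (m := Nat.max n (S (f u))).
  assert (Hxm : prefix m u) by (apply prefix_eventually; unfold m; lia).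
  split.
  - destruct (stage_vertex_left_end Ht Hl (m := m) ltac:(unfold m; lia)) as [e' He'].
    eapply cover_path_vertex; eauto.
  - destruct (stage_vertex_right_end Ht Hl (m := m) ltac:(unfold m; lia)) as [s' Hs'].
    eapply cover_path_vertex; eauto.
Qed.

Lemma cover_path_directed : directed_top_path E cover_path.
Proof.
  split; [apply cover_path_continuous|].
  intros t x y r Ht Hal. assert (Hp := cover_path_value t).
  destruct Hp as [[n [u [s [e [H1 [H2 Hv]]]]]]|[[n [x' [y' [a [b [H1 Hv]]]]]]|[H1 Hv]]];
    rewrite Hal in Hv; try discriminate.
  injection Hv as -> -> _.
  assert (Hok := stage_ok n (t := t) ltac:(lra)). rewrite H1 in Hok.
  destruct Hok as (Ha & Hb & Hxy & Hcons & [s Hsa] & [e Hbe]).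
  assert (Hala := proj2 (cover_path_piece_ends (t := a) ltac:(lra) Hsa)).
  assert (Halb := proj1 (cover_path_piece_ends (t := b) ltac:(lra) Hbe)).
  assert (Haff : forall t', a < t' < b -> cover_path t' = PI (NV x') (NV y') ((t' - a) / (b - a)))
    by (intros; apply cover_path_edge with (n := n); auto).
  exists a, b. split; [lra|split; [lra|split]].
  - apply affine_edge_homeo; auto; [apply cover_path_continuous|lra].
  - apply affine_edge_order; auto; lra.
Qed.

Lemma stage1_at_0 : stage 1 0 = OnVertex v0 0 (0 + slot_len 0 v0 0 1).
Proof.
  rewrite (@stage_S_refined 0 0 v0 0 1 eq_refl (@prefix_0 v0)).
  apply layout_start, slot_len_pos; lra.
Qed.

Lemma stage1_at_1 : stage 1 1 = OnVertex v0 (1 - slot_len 0 v0 0 1) 1.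
Proof.
  rewrite (@stage_S_refined 0 1 v0 0 1 eq_refl (@prefix_0 v0)).
  destruct (refine_walk_spec (@prefix_0 v0)) as [_ [Hl _]].
  rewrite layout_end; [rewrite Hl; auto|apply slot_len_pos; lra|rewrite slot_len_span; auto].
Qed.

Lemma cover_path_closed : closed_path cover_path.
Proof.
  assert (Hv0 : prefix 1 v0) by (split; auto).
  unfold closed_path. rewrite (cover_path_vertex stage1_at_0 Hv0), (cover_path_vertex stage1_at_1 Hv0).
  auto.
Qed.

Section StronglyConnected.
Hypothesis strong : forall u v, reach E no_vertices u v.

Lemma stage_covers n :
  (forall v, prefix n v -> exists t, 0 <= t <= 1 /\ exists s e, stage n t = OnVertex v s e) /\
  (forall v, ~ prefix n v -> exists t, 0 <= t <= 1 /\ exists u s e,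
     stage n t = OnVertex u s e /\ ~ prefix n u /\ sc E (prefix n) u v).
Proof.
  induction n as [|n [IHin IHout]].
  - split; [intros v Hv; exfalso; apply (prefix_0 Hv)|].
    intros v Hv. exists 0. split; [lra|]. exists v0, 0, 1. split; [auto|split; [apply prefix_0|]].
    split; apply (reach_weaken (X := no_vertices)); auto; intros x Hx; apply (prefix_0 Hx).
  - assert (Hwalk : forall t u s e z, 0 <= t <= 1 -> stage n t = OnVertex u s e -> ~ prefix n u ->
        In z (u :: refine_walk n u) -> exists t', 0 <= t' <= 1 /\ exists a b, stage (S n) t' = OnVertex z a b).
    { intros t u s e z Ht Hl Hu Hz.
      assert (Hok := stage_ok n Ht). rewrite Hl in Hok. destruct Hok as (Hs & He & Hse & Hcons & _).
      destruct (layout_covers s (slot_len_pos n u Hse) Hz) as [t' [Ht' [a [b Hp]]]].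
      rewrite slot_len_span in Ht'. exists t'. split; [lra|]. exists a, b.
      rewrite (stage_S_refined (Hcons t' Ht') Hu). auto. }
    split.
    + intros v Hv. destruct (classic (prefix n v)) as [Hx|Hx].
      * destruct (IHin v Hx) as [t [Ht [s [e Hl]]]]. exists t. split; auto. exists s, e.
        apply (stage_S_frozen Hl Hx).
      * destruct (IHout v Hx) as [t [Ht [u [s [e [Hl [Hu Hsc]]]]]]].
        destruct (refine_walk_spec Hu) as (_ & _ & _ & Hcov & _).
        apply (Hwalk t u s e v Ht Hl Hu). apply Hcov; auto.
    + intros v Hv. assert (Hx : ~ prefix n v) by (intros H; apply Hv, prefix_S; auto).
      destruct (IHout v Hx) as [t [Ht [u [s [e [Hl [Hu Hsc]]]]]]].
      destruct (refine_walk_spec Hu) as (_ & _ & _ & _ & Hrep).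
      destruct (Hrep v Hv Hsc) as [z [Hz Hzv]].
      destruct (Hwalk t u s e z Ht Hl Hu Hz) as [t' [Ht' [a [b Hl']]]].
      exists t'. split; auto. exists z, a, b. split; [auto|split; [eapply sc_avoids_l; eauto|auto]].
Qed.

Lemma cover_path_covers v : exists t, 0 <= t <= 1 /\ cover_path t = PN (NV v).
Proof.
  destruct (proj1 (stage_covers (S (f v))) v (prefix_self v)) as [t [Ht [s [e Hl]]]].
  exists t. split; auto. eapply cover_path_vertex; eauto. apply prefix_self.
Qed.

End StronglyConnected.

End Construction.

(** * Closed covering paths force strong connectivity *)

(* Consider the supremum of the [s] such that [P] holds on [[t1, s]]. *)
Lemma right_persistent_everywhere (P : R -> Prop) t1 t2 : t1 <= t2 -> P t1 ->
  (forall t, t1 <= t < t2 -> P t ->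
     exists d, 0 < d /\ forall t', t <= t' < t + d -> t' < t2 -> P t') ->
  (forall t, t1 <= t <= t2 -> ~ P t ->
     exists d, 0 < d /\ forall t', t1 <= t' <= t2 -> Rabs (t' - t) < d -> ~ P t') ->
  P t2.
Proof.
  intros H12 HP1 Hright Hfail. apply NNPP. intros HP2.
  set (T := fun s => t1 <= s <= t2 /\ forall s', t1 <= s' <= s -> P s').
  assert (HT1 : T t1) by (split; [lra|intros s' Hs'; replace s' with t1 by lra; auto]).
  destruct (completeness T (ex_intro _ t2 (fun s Hs => proj2 (proj1 Hs))) (ex_intro _ t1 HT1))
    as [m [Hub Hlub]].
  assert (Hm1 : t1 <= m) by (apply Hub; auto).
  assert (Hm2 : m <= t2) by (apply Hlub; intros s [Hs _]; lra).
  assert (Hbelow : forall s', t1 <= s' < m -> P s').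
  { intros s' Hs'. apply NNPP. intros Hn.
    assert (Hup : is_upper_bound T s').
    { intros s [Hs Hs2]. destruct (Rle_dec s s') as [Hle|Hgt]; auto.
      exfalso. apply Hn, Hs2. lra. }
    specialize (Hlub s' Hup). lra. }
  destruct (classic (P m)) as [HPm|HPm].
  - assert (Hmt2 : m < t2) by (destruct (Req_dec m t2) as [->|]; [contradiction|lra]).
    destruct (Hright m ltac:(lra) HPm) as [d [Hd Hd']].
    assert (M1 := Rmin_l d (t2 - m)). assert (M2 := Rmin_r d (t2 - m)).
    assert (Hpos : 0 < Rmin d (t2 - m)) by (apply Rmin_pos; lra).
    set (s := m + Rmin d (t2 - m) / 2).
    assert (HTs : T s).
    { split; [unfold s; lra|]. intros s' Hs'.
      destruct (Rlt_dec s' m); [apply Hbelow; lra|apply Hd'; unfold s in *; lra]. }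
    assert (Hsm := Hub s HTs). unfold s in Hsm. lra.
  - assert (Hmt1 : t1 < m) by (destruct (Req_dec m t1) as [->|]; [contradiction|lra]).
    destruct (Hfail m ltac:(lra) HPm) as [d [Hd Hd']].
    assert (M1 := Rmax_l t1 (m - d / 2)). assert (M2 := Rmax_r t1 (m - d / 2)).
    assert (Hs'm : Rmax t1 (m - d / 2) < m) by (apply Rmax_lub_lt; lra).
    apply (Hd' (Rmax t1 (m - d / 2))); [lra|apply Rabs_def1; lra|apply Hbelow; lra].
Qed.

Section Converse.
Context {V : Type} (E : V -> V -> Prop) (no_loops : forall v, ~ E v v) (u0 : V).

Notation nv := (@no_vertices V).

Lemma no_vertices_finite : finite_set nv.
Proof. exists nil. intros v []. Qed.

Definition reached (x : V) : Prop := reach E nv u0 x.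

Lemma reached_edge x y : reached x -> E x y -> reached y.
Proof. intros Hx Hxy. eapply reach_trans; eauto. apply reach_edge; auto. Qed.

Lemma reached_sc x y : reached x -> sc E nv x y -> reached y.
Proof. intros Hx [H _]. eapply reach_trans; eauto. Qed.

Definition comp_of_end (w : (nat -> V) -> Prop) : V -> Prop :=
  epsilon (inhabits (fun _ => False)) (fun C => lives E nv w C).

Lemma comp_of_end_spec w : is_end E w -> lives E nv w (comp_of_end w).
Proof.
  intros Hw. unfold comp_of_end. apply epsilon_spec.
  apply end_lives_somewhere; auto. apply no_vertices_finite.
Qed.

Lemma comp_of_end_reached w c c' : is_end E w -> comp_of_end w c -> comp_of_end w c' ->
  reached c -> reached c'.
Proof.
  intros Hw Hc Hc' Ha. destruct (comp_of_end_spec Hw) as [[c0 [_ HC0]] _].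
  apply HC0 in Hc. apply HC0 in Hc'. eapply reached_sc; eauto.
  eapply sc_trans; [apply sc_sym, Hc|]. auto.
Qed.

Definition node_reached (n : @node V) : Prop :=
  match n with
  | NV x => reached x
  | NE w => exists C, lives E nv w C /\ forall c, C c -> reached c
  end.

Definition point_reached (p : @point V) : Prop :=
  match p with PN n => node_reached n | PI x _ _ => node_reached x end.

Lemma node_reached_end w : is_end E w ->
  (node_reached (NE w) <-> exists c, comp_of_end w c /\ reached c).
Proof.
  intros Hw. assert (Hl := comp_of_end_spec Hw). split.
  - intros [C [HlC HC]]. destruct (scomp_nonempty (proj1 HlC)) as [c Hc]. exists c.
    split; [eapply lives_unique; eauto|auto].
  - intros [c [Hc Ha]]. exists (comp_of_end w). split; auto.
    intros c' Hc'. apply (comp_of_end_reached Hw Hc Hc' Ha).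
Qed.

Lemma node_reached_end_all w : is_end E w -> node_reached (NE w) ->
  forall c, comp_of_end w c -> reached c.
Proof.
  intros Hw HA c Hc. destruct (proj1 (node_reached_end Hw) HA) as [c' [Hc' Ha]].
  apply (comp_of_end_reached Hw Hc' Hc Ha).
Qed.

Lemma node_in_reached w n : is_end E w -> node_in E nv (comp_of_end w) n ->
  (node_reached (NE w) <-> node_reached n).
Proof.
  intros Hw Hn. destruct n as [c|w']; simpl in Hn |- *.
  - rewrite (node_reached_end Hw). split; [|eauto].
    intros [c' [Hc' Ha]]. apply (comp_of_end_reached Hw Hc' Hn Ha).
  - destruct Hn as [Hw' Hl]. rewrite (node_reached_end Hw), (node_reached_end Hw').
    split; intros [c [Hc Ha]]; exists c; split; auto.
    + eapply lives_unique; [exact Hw'|exact Hl|apply comp_of_end_spec; auto|auto].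
    + eapply lives_unique; [exact Hw'|apply comp_of_end_spec; auto|exact Hl|auto].
Qed.

Lemma dedge_reached x y : dedge E x y -> node_reached x -> node_reached y.
Proof.
  destruct x as [a|w]; destruct y as [b|w']; simpl.
  - intros Hab Ha. eapply reached_edge; eauto.
  - intros [Hw' Hlim] Ha. apply (node_reached_end Hw').
    destruct (classic (comp_of_end w' a)) as [Hin|Hout]; [eauto|].
    destruct (Hlim nv no_vertices_finite _ (comp_of_end_spec Hw') Hout) as [c [Hc Hac]].
    exists c. split; [auto|eapply reached_edge; eauto].
  - intros [Hw Hlim] HA. assert (Hall := node_reached_end_all Hw HA).
    destruct (classic (comp_of_end w b)) as [Hin|Hout]; [auto|].
    destruct (Hlim nv no_vertices_finite _ (comp_of_end_spec Hw) Hout) as [c [Hc Hcb]].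
    eapply reached_edge; eauto.
  - intros [Hw [Hw' [_ Hlim]]] HA. assert (Hall := node_reached_end_all Hw HA).
    apply (node_reached_end Hw').
    destruct (classic (same_set (comp_of_end w) (comp_of_end w'))) as [Hs|Hs].
    + destruct (scomp_nonempty (proj1 (comp_of_end_spec Hw))) as [c Hc].
      exists c. split; [apply Hs; auto|auto].
    + destruct (Hlim nv no_vertices_finite _ _ (comp_of_end_spec Hw) (comp_of_end_spec Hw') Hs)
        as [a [c [Ha [Hc Hac]]]].
      exists c. split; [auto|eapply reached_edge; eauto].
Qed.

(* A basic open neighbourhood of a node: with radius 2, the star of a vertex contains
   every edge at it, and [Chat] over [X = ∅] every edge with an end in the component. *)
Definition basic_nbhd (n : @node V) : @point V -> Prop :=
  match n with NV a => star E a 2 | NE w => Chat E nv (comp_of_end w) 2 end.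

Lemma subbase_open W : subbase E W -> openD E W.
Proof.
  intros HW p Hp HWp. exists (W :: nil). split; [constructor; auto|split; [constructor; auto|]].
  intros q _ Hq. inversion Hq; auto.
Qed.

Lemma basic_nbhd_open n : valid_node E n -> openD E (basic_nbhd n).
Proof.
  intros Hn. apply subbase_open. destruct n as [a|w]; simpl.
  - left. exists a, 2. split; auto; lra.
  - right; right; left. exists nv, w, (comp_of_end w), 2.
    split; [apply no_vertices_finite|split; [exact Hn|split; [apply comp_of_end_spec; exact Hn|]]].
    split; [lra|reflexivity].
Qed.

Definition tail_node (p : @point V) : @node V := match p with PN n => n | PI x _ _ => x end.

Lemma point_reached_tail_node p : point_reached p = node_reached (tail_node p).
Proof. destruct p; auto. Qed.

Lemma valid_tail_node p : valid_point E p -> valid_node E (tail_node p).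
Proof.
  destruct p as [n|x y r]; simpl; auto. intros [Hd _].
  destruct x as [a|w]; simpl; auto. destruct y; simpl in Hd; tauto.
Qed.

Lemma basic_nbhd_tail_node p : valid_point E p -> basic_nbhd (tail_node p) p.
Proof.
  destruct p as [[a|w]|x y r]; simpl.
  - left; auto.
  - intros Hv. left. exists (NE w). split; auto. simpl. split; auto. apply comp_of_end_spec; auto.
  - intros [Hd Hr]. destruct x as [a|w]; simpl.
    + right; left. exists y, r. repeat split; auto; lra.
    + right. exists (NE w), y, r. split; [auto|split; [auto|split; [auto|]]].
      assert (Hw : is_end E w) by (destruct y; simpl in Hd; tauto).
      assert (Hx : node_in E nv (comp_of_end w) (NE w))
        by (simpl; split; auto; apply comp_of_end_spec; auto).
      destruct (classic (node_in E nv (comp_of_end w) y)); [left; auto|].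
      right; left. split; [exact Hx|split; [assumption|lra]].
Qed.

(* Leaving the basic neighbourhood of a reached node is only possible backwards, along
   an edge whose tail lies outside it. *)
Lemma basic_nbhd_reached n : valid_node E n -> node_reached n ->
  forall q, basic_nbhd n q -> point_reached q \/ exists y z r, q = PI y z r /\ ~ basic_nbhd n (PN y).
Proof.
  intros Hn HA q HN. destruct n as [a|w]; simpl in HN.
  - destruct HN as [->|[(y & r & -> & _)|(x & r & -> & Hd & _)]]; [left; auto|left; auto|].
    right. exists x, (NV a), r. split; auto. simpl.
    intros [H|[(y & r' & H & _)|(y & r' & H & _)]]; try discriminate.
    injection H as ->. exact (no_loops Hd).
  - simpl in Hn. destruct HN as [(m & -> & Hm)|(x & y & r & -> & Hd & Hr & Hc)].
    + left. apply (node_in_reached Hn Hm); auto.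
    + destruct Hc as [(H1 & _)|[(H1 & _)|(H1 & H2 & _)]];
        [left; apply (node_in_reached Hn H1); auto|left; apply (node_in_reached Hn H1); auto|].
      right. exists x, y, r. split; auto. simpl.
      intros [(m & H & Hm)|(x' & y' & r' & H & _)]; [|discriminate]. injection H as ->. auto.
Qed.

Lemma basic_nbhd_unreached n : valid_node E n -> ~ node_reached n ->
  forall q, basic_nbhd n q -> ~ point_reached q.
Proof.
  intros Hn HA q HN. destruct n as [a|w]; simpl in HN.
  - destruct HN as [->|[(y & r & -> & _)|(x & r & -> & Hd & _)]]; simpl; auto.
    intros Hx. apply HA. exact (dedge_reached Hd Hx).
  - simpl in Hn. destruct HN as [(m & -> & Hm)|(x & y & r & -> & Hd & Hr & Hc)].
    + simpl. rewrite <- (node_in_reached Hn Hm). auto.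
    + simpl. destruct Hc as [(H1 & _)|[(H1 & _)|(H1 & H2 & _)]];
        [rewrite <- (node_in_reached Hn H1); auto|rewrite <- (node_in_reached Hn H1); auto|].
      intros Hx. apply HA. rewrite (node_in_reached Hn H2). exact (dedge_reached Hd Hx).
Qed.

Lemma dedge_neq x y : dedge E x y -> x <> y.
Proof. intros Hd ->. destruct y as [a|w]; simpl in Hd; [exact (no_loops Hd)|tauto]. Qed.

Lemma edge_coord_unique (x y : @node V) p c c' : x <> y ->
  edge_coord x y p c -> edge_coord x y p c' -> c = c'.
Proof.
  intros Hxy [(H1 & H2)|[(H1 & H2)|(H1 & H2)]] [(H3 & H4)|[(H3 & H4)|(H3 & H4)]]; subst;
    try congruence; injection H3; intros; congruence.
Qed.

Section DirectedPath.
Variable al : R -> @point V.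
Hypothesis al_directed : directed_top_path E al.

Lemma path_valid t : 0 <= t <= 1 -> valid_point E (al t).
Proof. intros Ht. apply (proj1 (proj1 al_directed)). exact Ht. Qed.

(* Order preservation forces the path to enter an edge through its tail. *)
Lemma directed_path_edge_tail t' y z r : 0 < t' < 1 -> al t' = PI y z r ->
  exists a', 0 <= a' < t' /\ al a' = PN y /\ forall s, a' < s < t' -> exists c, al s = PI y z c.
Proof.
  intros Ht' Hal. destruct (proj2 al_directed t' y z r Ht' Hal) as [a [b [Ha [Hb [Hh Ho]]]]].
  destruct Hh as (H1 & H2 & _).
  assert (Hv := path_valid (t := t') ltac:(lra)). rewrite Hal in Hv. destruct Hv as [Hd _].
  assert (Hyz := dedge_neq Hd).
  exists a. split; [lra|split].
  - destruct (Ho a a ltac:(lra) ltac:(lra) ltac:(lra)) as [c1 [_ [Hc1 [_ _]]]].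
    destruct Hc1 as [(Hp & _)|Hc1]; auto. exfalso.
    assert (Hc1pos : 0 < c1 <= 1) by (destruct Hc1 as [(_ & ->)|(_ & Hc)]; lra).
    destruct (H2 (c1 / 2) ltac:(lra)) as [t'' [Ht'' Hal'']].
    destruct (Ho a t'' ltac:(lra) ltac:(lra) ltac:(lra)) as [c1' [c2' [Hc1' [Hc2' Hle]]]].
    rewrite Hal'' in Hc2'.
    assert (Ec2 : c2' = c1 / 2)
      by (apply (edge_coord_unique Hyz Hc2'); right; right; split; auto; lra).
    assert (Ec1 : c1' = c1) by (apply (edge_coord_unique Hyz Hc1'); right; auto).
    lra.
  - intros s Hs. destruct (H1 s ltac:(lra)) as [c [_ Hc]]. eauto.
Qed.

Lemma path_in_basic_nbhd t : 0 <= t <= 1 -> exists d, 0 < d /\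
  forall t', 0 <= t' <= 1 -> Rabs (t' - t) < d -> basic_nbhd (tail_node (al t)) (al t').
Proof.
  intros Ht. assert (Hv := path_valid Ht).
  destruct (proj2 (proj1 al_directed) _ (basic_nbhd_open (valid_tail_node Hv)) t Ht
              (conj Ht (basic_nbhd_tail_node Hv))) as [d [Hd Hd']].
  exists d. split; auto. intros t' Ht' Htt. apply (Hd' t' Ht' Htt).
Qed.

Lemma reached_persists_right t : 0 <= t < 1 -> point_reached (al t) ->
  exists d, 0 < d /\ forall t', t <= t' < t + d -> t' < 1 -> point_reached (al t').
Proof.
  intros Ht HA.
  destruct (classic (0 < t /\ exists x y r, al t = PI x y r)) as [[Ht0 (x & y & r & Hal)]|Hno].
  - destruct (proj2 al_directed t x y r ltac:(lra) Hal) as [a [b [Ha [Hb [[H1 _] _]]]]].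
    exists (b - t). split; [lra|]. intros t' Ht' Ht1.
    destruct (Req_dec t' t) as [->|Hne]; auto.
    destruct (H1 t' ltac:(lra)) as [c [_ Hc]]. rewrite Hc. rewrite Hal in HA. exact HA.
  - destruct (path_in_basic_nbhd (t := t) ltac:(lra)) as [d [Hd Hd']].
    exists d. split; auto. intros t' Ht' Ht1.
    destruct (Req_dec t' t) as [->|Hne]; auto.
    assert (HN' := Hd' t' ltac:(lra) ltac:(apply Rabs_def1; lra)).
    rewrite point_reached_tail_node in HA.
    destruct (basic_nbhd_reached (valid_tail_node (path_valid (t := t) ltac:(lra))) HA HN')
      as [HP|(y & z & r & Hq & HnN)]; auto.
    exfalso. destruct (directed_path_edge_tail (t' := t') ltac:(lra) Hq) as [a' [Ha' [Hala' Hs]]].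
    destruct (Rlt_dec a' t) as [Hlt|Hge].
    + destruct (Hs t ltac:(lra)) as [c Hc]. apply Hno. split; [lra|eauto].
    + apply HnN. rewrite <- Hala'. apply Hd'; [lra|apply Rabs_def1; lra].
Qed.

Lemma unreached_locally t : 0 <= t <= 1 -> ~ point_reached (al t) ->
  exists d, 0 < d /\ forall t', 0 <= t' <= 1 -> Rabs (t' - t) < d -> ~ point_reached (al t').
Proof.
  intros Ht HA. destruct (path_in_basic_nbhd Ht) as [d [Hd Hd']].
  exists d. split; auto. intros t' Ht' Htt.
  rewrite point_reached_tail_node in HA.
  apply (basic_nbhd_unreached (valid_tail_node (path_valid Ht)) HA (Hd' t' Ht' Htt)).
Qed.

Lemma reached_forward t1 t2 : 0 <= t1 <= t2 -> t2 <= 1 -> point_reached (al t1) ->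
  point_reached (al t2).
Proof.
  intros H12 H2 HA1. apply (right_persistent_everywhere (P := fun t => point_reached (al t)) (t1 := t1));
    auto; [lra| |].
  - intros t Ht HA. destruct (reached_persists_right (t := t) ltac:(lra) HA) as [d [Hd Hd']].
    exists d. split; auto. intros t' Ht' Ht'2. apply Hd'; lra.
  - intros t Ht HA. destruct (unreached_locally (t := t) ltac:(lra) HA) as [d [Hd Hd']].
    exists d. split; auto. intros t' Ht' Htt. apply Hd'; auto; lra.
Qed.

End DirectedPath.

Lemma strongly_connected_of_closed_cover (al : R -> @point V) :
  directed_top_path E al -> closed_path al ->
  (forall v : V, exists t, 0 <= t <= 1 /\ al t = PN (NV v)) -> forall v, reach E nv u0 v.
Proof.
  intros Hdir Hcl Hcov v.
  destruct (Hcov u0) as [tu [Htu Halu]]. destruct (Hcov v) as [tv [Htv Halv]].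
  assert (HAu : point_reached (al tu)) by (rewrite Halu; constructor; intros []).
  change (point_reached (PN (NV v))). rewrite <- Halv.
  destruct (Rle_dec tu tv) as [Hle|Hgt]; [apply (reached_forward Hdir (t1 := tu)); auto; lra|].
  apply (reached_forward Hdir (t1 := 0)); [lra|lra|]. rewrite Hcl.
  apply (reached_forward Hdir (t1 := tu)); auto; lra.
Qed.

End Converse.

Theorem theorem4 (V : Type) (E : V -> V -> Prop)
  (no_loops : forall v, ~ E v v)
  (hcount : @countable_vertices V)
  (hsolid : solid E) :
  strongly_connected E <->
  exists alpha : R -> @point V,
    directed_top_path E alpha /\ closed_path alpha /\
    forall v : V, exists t, 0 <= t <= 1 /\ alpha t = PN (NV v).
Proof.
  split.
  - intros [[v0 _] hstrong]. destruct hcount as [f f_inj]. exists (cover_path E v0 f).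
    split; [apply cover_path_directed; auto|].
    split; [apply cover_path_closed; auto|].
    intros v. apply cover_path_covers; auto.
  - intros [al [Hdir [Hcl Hcov]]]. split.
    + apply (@valid_point_inhabited V E (al 0)). apply (proj1 (proj1 Hdir)). red; lra.
    + intros u v. exact (strongly_connected_of_closed_cover no_loops u Hdir Hcl Hcov v).
Qed.
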